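(* Let $N\geq 10^{100000}$ be a real number and $f_N(x)=\dfrac{\log N+\log(x-1)}{\log x}$ for real $x>1$. Let $M\geq 10^5$ and $\delta=1/(N\log M)$. Then for each $k=1,\ldots,6$, $$R(f_N,M,\delta)\leq C_k\,(\log N)^{2/(k^2+k)}\,M^{1-2/(k+1)},$$ where $C_1=0.03022$, $C_2=1.04272$, $C_3=3.49005$, $C_4=6.49141$, $C_5=9.57310$, $C_6=12.5825$.
   Context: For a real function $f$ and positive reals $M,\delta$, $R(f,M,\delta)$ is the number of integers $x\in[M,2M]$ such that $\|f(x)\|<\delta$, where $\|t\|$ denotes the distance from the real number $t$ to the nearest integer. $\log$ is the natural logarithm. *)

From Stdlib Require Import Reals Lra Lia ZArith List.
Open Scope R_scope.

Definition dist_int (t : R) : R :=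
  Rmin (t - IZR (Int_part t)) (IZR (Int_part t) + 1 - t).

Definition Zrange (lo hi : Z) : list Z :=
  map (fun i => (lo + Z.of_nat i)%Z) (seq 0 (Z.to_nat (hi - lo + 1))).

Definition Rcount (f : R -> R) (M delta : R) : nat :=
  length (filter (fun x : Z =>
             if Rlt_dec (IZR x) M then false
             else if Rlt_dec (2 * M) (IZR x) then false
             else if Rlt_dec (dist_int (f (IZR x))) delta then true else false)
          (Zrange (up M - 1) (up (2 * M)))).

Definition fN (N x : R) : R := (ln N + ln (x - 1)) / ln x.

Definition Ck (k : nat) : R :=
  match k with
  | 1 => 3022 / 100000
  | 2 => 104272 / 100000
  | 3 => 349005 / 100000
  | 4 => 649141 / 100000
  | 5 => 957310 / 100000
  | 6 => 125825 / 10000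
  | _ => 0
  end.

(* If integers x_0 < ... < x_k in [M, 2M] have
   f(x_i) within delta of integers m_i, the divided difference of the m_i is, by the mean value
   theorem for divided differences, within (k+1) delta of f^(k)(xi)/k!; when |f^(k)| >= lambda
   is large enough it is therefore a nonzero rational whose denominator divides the Vandermonde
   product, which is at most (x_k - x_0)^(k(k+1)/2).  So any k+1 consecutive hits are spread
   apart, and the number of hits is at most k M (Lambda/k! + (k+1) delta)^(2/(k(k+1))) + k.

   For f_N, t^k (ln t)^2 f_N^(k)(t) = (ln N + ln (t-1)) a + b with explicitly computed bounds
   on a and b, so |f_N^(k)| is of order ln N / (M^k ln^2 M) on [M, 2M].  If ln M >= 0.9 ln N,
   f_N is close to 2 and all hits lie in an interval of length 24; otherwise the first
   derivative test gives at most ln N / ln^2 M + 3/2 hits, and the k-th derivative test gives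
   the bound with C_k as long as k ln M <= ln N / 2, while beyond that range ln N / ln^2 M is
   already tiny. *)

From Stdlib Require Import Reals Lra Lia List Sorted ZArith FunctionalExtensionality ClassicalChoice Bool.
From Coquelicot Require Import Coquelicot.
Import ListNotations.
Open Scope R_scope.

Ltac prove_pos := repeat (apply Rmult_lt_0_compat || apply Rinv_0_lt_compat || apply pow_lt); lra.

Fixpoint prodR (n : nat) (F : nat -> R) : R :=
  match n with O => 1 | S n => prodR n F * F n end.
Fixpoint sumR (n : nat) (F : nat -> R) : R :=
  match n with O => 0 | S n => sumR n F + F n end.

Lemma prodR_ext n F G : (forall j, (j < n)%nat -> F j = G j) -> prodR n F = prodR n G.
Proof. induction n; simpl; intros H; auto. rewrite IHn, H; auto. Qed.

Lemma sumR_ext n F G : (forall j, (j < n)%nat -> F j = G j) -> sumR n F = sumR n G.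
Proof. induction n; simpl; intros H; auto. rewrite IHn, H; auto. Qed.

Lemma prodR_eq0 n F j : (j < n)%nat -> F j = 0 -> prodR n F = 0.
Proof.
  induction n; simpl; intros Hj H0; [lia|].
  destruct (Nat.eq_dec j n) as [->|]; [rewrite H0; ring|rewrite IHn; [ring|lia|auto]].
Qed.

Lemma prodR_neq0 n F : (forall j, (j < n)%nat -> F j <> 0) -> prodR n F <> 0.
Proof.
  induction n; simpl; intros H; [lra|].
  apply Rmult_integral_contrapositive; split; [apply IHn; auto|apply H; lia].
Qed.

Lemma sumR_zero n : sumR n (fun _ => 0) = 0.
Proof. induction n; simpl; [|rewrite IHn]; ring. Qed.

Lemma sumR_single n F l : (l < n)%nat ->
  (forall j, (j < n)%nat -> j <> l -> F j = 0) -> sumR n F = F l.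
Proof.
  induction n; simpl; intros Hl H; [lia|].
  destruct (Nat.eq_dec l n) as [->|].
  - rewrite (sumR_ext _ _ (fun _ => 0)), sumR_zero; [ring|]. intros; apply H; lia.
  - rewrite IHn, (H n); [ring|lia|lia|lia|]. intros; apply H; lia.
Qed.

Lemma prodR_pick m F i : (i < m)%nat ->
  prodR m F = F i * prodR m (fun j => if Nat.eqb j i then 1 else F j).
Proof.
  induction m; intros Hi; simpl; [lia|].
  destruct (Nat.eqb_spec m i) as [->|].
  - rewrite (prodR_ext i (fun j => if Nat.eqb j i then 1 else F j) F); [ring|].
    intros j Hj. destruct (Nat.eqb_spec j i); [lia|auto].
  - rewrite IHm by lia. ring.
Qed.

(** * Smooth functions and Lagrange interpolation *)

Definition smooth (f : R -> R) := forall j t, ex_derive (Derive_n f j) t.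

Lemma Derive_n_plus_smooth f g n t : smooth f -> smooth g ->
  Derive_n (fun x => f x + g x) n t = Derive_n f n t + Derive_n g n t.
Proof.
  intros Hf Hg. apply Derive_n_plus; apply filter_forall; intros y k _; destruct k; simpl; auto.
Qed.

Lemma smooth_plus f g : smooth f -> smooth g -> smooth (fun x => f x + g x).
Proof.
  intros Hf Hg j t.
  rewrite (functional_extensionality _ (fun t => Derive_n f j t + Derive_n g j t))
    by (intros; apply Derive_n_plus_smooth; auto).
  apply (ex_derive_plus (Derive_n f j)); auto.
Qed.

Lemma smooth_scal f a : smooth f -> smooth (fun x => a * f x).
Proof.
  intros Hf j t.
  rewrite (functional_extensionality _ (fun t => a * Derive_n f j t))
    by (intros; apply Derive_n_scal_l).
  apply ex_derive_scal; auto.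
Qed.

Lemma smooth_const c : smooth (fun _ => c).
Proof.
  intros [|j] t; [apply ex_derive_const|].
  rewrite (functional_extensionality _ (fun _ => 0)) by (intros; apply Derive_n_const).
  apply ex_derive_const.
Qed.

Lemma smooth_sumR m (F : nat -> R -> R) : (forall i, (i < m)%nat -> smooth (F i)) ->
  smooth (fun t => sumR m (fun i => F i t)).
Proof.
  induction m; intros HF; simpl; [apply smooth_const|].
  apply smooth_plus; auto.
Qed.

Lemma Derive_n_sumR m (F : nat -> R -> R) k t : (forall i, (i < m)%nat -> smooth (F i)) ->
  Derive_n (fun t => sumR m (fun i => F i t)) k t = sumR m (fun i => Derive_n (F i) k t).
Proof.
  induction m; intros HF; simpl.
  - destruct k; [reflexivity|apply Derive_n_const].
  - rewrite Derive_n_plus_smooth, IHm; auto. apply smooth_sumR; auto.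
Qed.

Lemma Derive_n_mul_linear Q a n t : smooth Q ->
  Derive_n (fun x => Q x * (x - a)) (S n) t =
  Derive_n Q (S n) t * (t - a) + INR (S n) * Derive_n Q n t.
Proof.
  intros HQ. revert t; induction n; intros t.
  - apply is_derive_unique. change (is_derive (fun x => Q x * (x - a)) t (Derive Q t * (t - a) + 1 * Q t)).
    rewrite Rmult_comm with (r1 := 1).
    apply (is_derive_mult Q (fun x => x - a)); [apply Derive_correct, (HQ 0%nat t)| |].
    + auto_derive; auto.
    + intros; apply Rmult_comm.
  - change (Derive_n (fun x => Q x * (x - a)) (S (S n)) t) with
      (Derive (Derive_n (fun x => Q x * (x - a)) (S n)) t).
    rewrite (functional_extensionality _ _ IHn). apply is_derive_unique.
    replace (Derive_n Q (S (S n)) t * (t - a) + INR (S (S n)) * Derive_n Q (S n) t)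
      with ((Derive_n Q (S (S n)) t * (t - a) + Derive_n Q (S n) t * 1)
            + INR (S n) * Derive_n Q (S n) t) by (rewrite (S_INR (S n)); ring).
    apply (is_derive_plus (fun t => Derive_n Q (S n) t * (t - a))).
    + apply (is_derive_mult (Derive_n Q (S n)) (fun x => x - a));
        [apply Derive_correct, HQ| |intros; apply Rmult_comm].
      auto_derive; auto.
    + apply is_derive_scal, Derive_correct, HQ.
Qed.

Lemma smooth_mul_linear Q a : smooth Q -> smooth (fun x => Q x * (x - a)).
Proof.
  intros HQ [|j] t.
  - apply ex_derive_mult; [apply (HQ 0%nat t)|auto_derive; auto].
  - rewrite (functional_extensionality _ _ (fun t => Derive_n_mul_linear Q a j t HQ)).
    apply (ex_derive_plus (fun t => Derive_n Q (S j) t * (t - a))).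
    + apply ex_derive_mult; [apply HQ|auto_derive; auto].
    + apply ex_derive_scal, HQ.
Qed.

Fixpoint nb_kept (m : nat) (skip : nat -> bool) : nat :=
  match m with O => O | S m => (nb_kept m skip + if skip m then 0 else 1)%nat end.

Definition linear_product (m : nat) (skip : nat -> bool) (a : nat -> R) (t : R) : R :=
  prodR m (fun j => if skip j then 1 else t - a j).

Lemma linear_product_S m skip a :
  linear_product (S m) skip a =
  fun t => if skip m then linear_product m skip a t else linear_product m skip a t * (t - a m).
Proof.
  apply functional_extensionality; intros t.
  unfold linear_product; simpl; destruct (skip m); ring.
Qed.

Lemma smooth_linear_product m skip a : smooth (linear_product m skip a).
Proof.
  induction m; [exact (smooth_const 1)|].
  rewrite linear_product_S. destruct (skip m); [exact IHm|apply smooth_mul_linear, IHm].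
Qed.

Lemma Derive_n_linear_product_high m skip a n t : (nb_kept m skip < n)%nat ->
  Derive_n (linear_product m skip a) n t = 0.
Proof.
  revert n t; induction m; intros n t Hn.
  - destruct n; [simpl in Hn; lia|exact (Derive_n_const n 1 t)].
  - rewrite linear_product_S. simpl in Hn. destruct (skip m); [apply IHm; lia|].
    destruct n as [|n]; [lia|].
    rewrite Derive_n_mul_linear by apply smooth_linear_product.
    rewrite !IHm by lia. ring.
Qed.

Lemma Derive_n_linear_product_top m skip a t :
  Derive_n (linear_product m skip a) (nb_kept m skip) t = INR (fact (nb_kept m skip)).
Proof.
  revert t; induction m; intros t; [reflexivity|].
  rewrite linear_product_S. simpl nb_kept. destruct (skip m); [rewrite Nat.add_0_r; apply IHm|].
  rewrite Nat.add_1_r, Derive_n_mul_linear by apply smooth_linear_product.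
  rewrite IHm, Derive_n_linear_product_high by lia.
  change (fact (S (nb_kept m skip))) with (S (nb_kept m skip) * fact (nb_kept m skip))%nat.
  rewrite mult_INR. ring.
Qed.

Lemma nb_kept_skip_one n i : (i <= n)%nat -> nb_kept (S n) (fun j => Nat.eqb j i) = n.
Proof.
  intros Hi.
  enough (H : forall m, nb_kept m (fun j => Nat.eqb j i) = if Nat.leb m i then m else (m - 1)%nat)
    by (rewrite H; destruct (Nat.leb_spec (S n) i); lia).
  induction m; [reflexivity|]. cbn [nb_kept]. rewrite IHm.
  destruct (Nat.eqb_spec m i), (Nat.leb_spec m i), (Nat.leb_spec (S m) i); lia.
Qed.

Definition increasing_nodes (n : nat) (x : nat -> R) := forall i, (i < n)%nat -> x i < x (S i).

Lemma increasing_nodes_lt n x : increasing_nodes n x ->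
  forall i j, (i < j)%nat -> (j <= n)%nat -> x i < x j.
Proof.
  intros H i j Hij Hj. induction j; [lia|].
  destruct (Nat.eq_dec i j) as [->|]; [apply H; lia|].
  apply Rlt_trans with (x j); [apply IHj; lia|apply H; lia].
Qed.

Lemma increasing_nodes_le n x : increasing_nodes n x ->
  forall i j, (i <= j)%nat -> (j <= n)%nat -> x i <= x j.
Proof.
  intros H i j Hij Hj. destruct (Nat.eq_dec i j) as [->|]; [lra|].
  left; apply (increasing_nodes_lt n); auto; lia.
Qed.

Lemma increasing_nodes_neq n x i j : increasing_nodes n x ->
  (i <= n)%nat -> (j <= n)%nat -> j <> i -> x i - x j <> 0.
Proof.
  intros H Hi Hj Hij. destruct (Nat.lt_ge_cases i j).
  - assert (x i < x j) by (apply (increasing_nodes_lt n); auto). lra.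
  - assert (x j < x i) by (apply (increasing_nodes_lt n); auto; lia). lra.
Qed.

Definition node_weight (n : nat) (x : nat -> R) (i : nat) : R :=
  prodR (S n) (fun j => if Nat.eqb j i then 1 else x i - x j).

Definition divdiff (n : nat) (x y : nat -> R) : R :=
  sumR (S n) (fun i => y i / node_weight n x i).

Definition lagrange_basis (n : nat) (x : nat -> R) (i : nat) (t : R) : R :=
  / node_weight n x i * linear_product (S n) (fun j => Nat.eqb j i) x t.

Definition interp (n : nat) (x y : nat -> R) (t : R) : R :=
  sumR (S n) (fun i => y i * lagrange_basis n x i t).

Lemma node_weight_neq0 n x i : increasing_nodes n x -> (i <= n)%nat -> node_weight n x i <> 0.
Proof.
  intros H Hi. apply prodR_neq0. intros j Hj.
  destruct (Nat.eqb_spec j i); [lra|apply (increasing_nodes_neq n); auto; lia].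
Qed.

Lemma smooth_interp n x y : smooth (interp n x y).
Proof.
  apply (smooth_sumR (S n) (fun i t => y i * lagrange_basis n x i t)); intros i _.
  do 2 apply smooth_scal. apply smooth_linear_product.
Qed.

Lemma sumR_scal_l m c F : sumR m (fun i => c * F i) = c * sumR m F.
Proof. induction m; simpl; [|rewrite IHm]; ring. Qed.

Lemma Derive_n_interp n x y t : increasing_nodes n x ->
  Derive_n (interp n x y) n t = INR (fact n) * divdiff n x y.
Proof.
  intros Hx. unfold interp, divdiff.
  rewrite (Derive_n_sumR (S n) (fun i t => y i * lagrange_basis n x i t))
    by (intros; do 2 apply smooth_scal; apply smooth_linear_product).
  rewrite <- sumR_scal_l. apply sumR_ext; intros i Hi.
  unfold lagrange_basis. rewrite !Derive_n_scal_l.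
  pose proof (Derive_n_linear_product_top (S n) (fun j => Nat.eqb j i) x t) as Htop.
  rewrite nb_kept_skip_one in Htop by lia. rewrite Htop.
  field. apply node_weight_neq0; auto; lia.
Qed.

Lemma interp_node n x y l : increasing_nodes n x -> (l <= n)%nat -> interp n x y (x l) = y l.
Proof.
  intros Hx Hl. unfold interp. rewrite (sumR_single _ _ l); [|lia|].
  - unfold lagrange_basis. change (linear_product (S n) (fun j => Nat.eqb j l) x (x l))
      with (node_weight n x l).
    field. apply node_weight_neq0; auto.
  - intros j Hj Hjl. unfold lagrange_basis, linear_product.
    rewrite (prodR_eq0 _ _ l); [ring|lia|].
    destruct (Nat.eqb_spec l j); [lia|ring].
Qed.

Lemma rolle_Derive (g : R -> R) a b : a < b -> g a = g b ->
  (forall t, a <= t <= b -> ex_derive g t) -> exists c, a < c < b /\ Derive g c = 0.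
Proof.
  intros Hab Hg Hd.
  assert (pr : forall t, a < t < b -> derivable_pt g t)
    by (intros t Ht; apply ex_derive_Reals_0, Hd; lra).
  destruct (Rolle g a b pr) as [c [Hc Hc0]]; auto.
  - intros t Ht. apply continuity_pt_filterlim.
    apply (ex_derive_continuous (K := R_AbsRing) (V := R_NormedModule)), Hd; lra.
  - exists c. split; auto. rewrite <- Hc0. symmetry; apply Derive_Reals.
Qed.

Lemma Derive_n_Derive g j : Derive_n (Derive g) j = Derive_n g (S j).
Proof.
  apply functional_extensionality; intros s.
  change (Derive g) with (Derive_n g 1). rewrite Derive_n_comp. f_equal; lia.
Qed.

Lemma generalized_rolle n : forall (g : R -> R) (x : nat -> R), increasing_nodes n x ->
  (forall i, (i <= n)%nat -> g (x i) = 0) ->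
  (forall j t, (j < n)%nat -> x O <= t <= x n -> ex_derive (Derive_n g j) t) ->
  exists xi, x O <= xi <= x n /\ Derive_n g n xi = 0.
Proof.
  induction n; intros g x Hx Hz Hd.
  - exists (x O). split; [lra|]. apply Hz; lia.
  - assert (Hc : forall i, exists c, (i <= n)%nat -> x i < c < x (S i) /\ Derive g c = 0).
    { intros i. destruct (Nat.le_gt_cases i n); [|exists 0; lia].
      assert (x O <= x i) by (apply (increasing_nodes_le (S n)); auto; lia).
      assert (x (S i) <= x (S n)) by (apply (increasing_nodes_le (S n)); auto; lia).
      destruct (rolle_Derive g (x i) (x (S i))) as [c Hc].
      - apply Hx; lia.
      - rewrite !Hz; auto; lia.
      - intros t Ht. apply (Hd O t); [lia|lra].
      - exists c; auto. }
    apply choice in Hc. destruct Hc as [c Hc].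
    assert (x O < c O) by (apply Hc; lia).
    assert (c n < x (S n)) by (apply Hc; lia).
    destruct (IHn (Derive g) c) as [xi [Hxi1 Hxi2]].
    + intros i Hi. apply Rlt_trans with (x (S i)); apply Hc; lia.
    + intros i Hi. apply Hc; auto.
    + intros j t Hj Ht. rewrite Derive_n_Derive. apply Hd; lra || lia.
    + exists xi. split; [lra|]. rewrite Derive_n_Derive in Hxi2. exact Hxi2.
Qed.

Lemma divdiff_mvt (f : R -> R) lo hi n (x : nat -> R) :
  (forall j t, lo < t < hi -> ex_derive (Derive_n f j) t) ->
  increasing_nodes n x -> lo < x O -> x n < hi ->
  exists xi, x O <= xi <= x n /\ Derive_n f n xi = INR (fact n) * divdiff n x (fun i => f (x i)).
Proof.
  intros Hf Hx Hlo Hhi.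
  set (P := interp n x (fun i => f (x i))).
  assert (HP := smooth_interp n x (fun i => f (x i))).
  assert (Hg : forall j t, lo < t < hi ->
            Derive_n (fun t => f t - P t) j t = Derive_n f j t - Derive_n P j t).
  { intros j t Ht. apply Derive_n_minus.
    - apply (locally_interval _ t lo hi); simpl; try lra.
      intros s H1 H2 [|k] Hk; [exact I|apply Hf; simpl in *; lra].
    - apply filter_forall. intros s [|k] Hk; [exact I|apply HP]. }
  destruct (generalized_rolle n (fun t => f t - P t) x Hx) as [xi [H1 H2]].
  - intros i Hi. unfold P. rewrite interp_node; auto; ring.
  - intros j t Hj Ht.
    apply (ex_derive_ext_loc (fun s => Derive_n f j s - Derive_n P j s)).
    + apply (locally_interval _ t lo hi); simpl; try lra.
      intros s Hs1 Hs2. symmetry. apply Hg; simpl in *; lra.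
    + apply (ex_derive_minus (Derive_n f j)); [apply Hf; lra|apply HP].
  - exists xi. split; auto. rewrite Hg in H2 by lra.
    unfold P in H2. rewrite Derive_n_interp in H2 by auto. lra.
Qed.

(** * Divided differences at integer nodes *)

Definition is_int (r : R) := exists z : Z, r = IZR z.

Lemma is_int_IZR z : is_int (IZR z).
Proof. exists z; reflexivity. Qed.

Lemma is_int_plus a b : is_int a -> is_int b -> is_int (a + b).
Proof. intros [x ->] [y ->]. exists (x + y)%Z. now rewrite plus_IZR. Qed.

Lemma is_int_minus a b : is_int a -> is_int b -> is_int (a - b).
Proof. intros [x ->] [y ->]. exists (x - y)%Z. now rewrite minus_IZR. Qed.

Lemma is_int_mult a b : is_int a -> is_int b -> is_int (a * b).
Proof. intros [x ->] [y ->]. exists (x * y)%Z. now rewrite mult_IZR. Qed.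

Lemma is_int_opp a : is_int a -> is_int (- a).
Proof. intros [x ->]. exists (- x)%Z. now rewrite opp_IZR. Qed.

Lemma is_int_prodR n F : (forall j, (j < n)%nat -> is_int (F j)) -> is_int (prodR n F).
Proof. induction n; simpl; intros H; [apply (is_int_IZR 1)|apply is_int_mult; auto]. Qed.

Lemma is_int_abs_ge1 r : is_int r -> r <> 0 -> 1 <= Rabs r.
Proof.
  intros [z ->] H. rewrite <- abs_IZR. apply IZR_le.
  assert (z <> 0%Z) by (intros ->; auto). lia.
Qed.

Definition vandermonde (n : nat) (x : nat -> R) : R :=
  prodR (S n) (fun l => prodR l (fun i => x l - x i)).

Lemma vandermonde_weight_multiple n x : (forall j, is_int (x j)) ->
  forall i, (i <= n)%nat -> exists r, is_int r /\ vandermonde n x = r * node_weight n x i.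
Proof.
  intros HZ. induction n; intros i Hi.
  - exists 1. split; [apply (is_int_IZR 1)|]. destruct i; [|lia].
    unfold vandermonde, node_weight; simpl; ring.
  - assert (Hint : forall l, is_int (prodR l (fun j => x (S n) - x j)))
      by (intros; apply is_int_prodR; intros; apply is_int_minus; auto).
    change (vandermonde (S n) x) with (vandermonde n x * prodR (S n) (fun j => x (S n) - x j)).
    change (node_weight (S n) x i) with
      (node_weight n x i * (if Nat.eqb (S n) i then 1 else x i - x (S n))).
    destruct (Nat.eq_dec i (S n)) as [->|Hne].
    + exists (vandermonde n x). split.
      * apply is_int_prodR. intros l _. apply is_int_prodR. intros; apply is_int_minus; auto.
      * rewrite Nat.eqb_refl. unfold node_weight. simpl prodR at 2.
        rewrite (prodR_ext n (fun j => if Nat.eqb j (S n) then 1 else x (S n) - x j)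
                   (fun j => x (S n) - x j)).
        -- destruct (Nat.eqb_spec n (S n)); [lia|]. simpl. ring.
        -- intros j Hj. destruct (Nat.eqb_spec j (S n)); [lia|auto].
    + destruct (IHn i) as [r [Hr ->]]; [lia|].
      destruct (Nat.eqb_spec (S n) i); [lia|].
      rewrite (prodR_pick (S n) _ i) by lia.
      exists (- r * prodR (S n) (fun j => if Nat.eqb j i then 1 else x (S n) - x j)).
      split; [|ring].
      apply is_int_mult; [apply is_int_opp; auto|].
      apply is_int_prodR. intros j _. destruct (Nat.eqb j i); [apply (is_int_IZR 1)|].
      apply is_int_minus; auto.
Qed.

Fixpoint triangular (n : nat) : nat :=
  match n with O => O | S n => (triangular n + S n)%nat end.

Lemma triangular_double n : (2 * triangular n = n * (n + 1))%nat.
Proof. induction n; simpl triangular; lia. Qed.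

Lemma prodR_bound m F H : (forall j, (j < m)%nat -> 0 < F j <= H) -> 0 < prodR m F <= H ^ m.
Proof.
  induction m; simpl; intros HF; [lra|].
  destruct IHm as [A B]; [intros; apply HF; lia|].
  assert (C := HF m (Nat.lt_succ_diag_r m)).
  split; [apply Rmult_lt_0_compat; lra|].
  rewrite Rmult_comm. apply Rmult_le_compat; lra.
Qed.

Lemma vandermonde_bound n N x : increasing_nodes N x -> (n <= N)%nat ->
  0 < vandermonde n x <= (x N - x O) ^ triangular n.
Proof.
  intros Hx. induction n; intros Hn; [unfold vandermonde; simpl; lra|].
  change (vandermonde (S n) x) with (vandermonde n x * prodR (S n) (fun i => x (S n) - x i)).
  destruct (IHn ltac:(lia)) as [A B].
  destruct (prodR_bound (S n) (fun i => x (S n) - x i) (x N - x O)) as [C D].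
  { intros j Hj.
    assert (x j < x (S n)) by (apply (increasing_nodes_lt N); auto; lia).
    assert (x O <= x j) by (apply (increasing_nodes_le N); auto; lia).
    assert (x (S n) <= x N) by (apply (increasing_nodes_le N); auto; lia).
    lra. }
  simpl triangular. rewrite pow_add.
  split; [apply Rmult_lt_0_compat|apply Rmult_le_compat]; lra.
Qed.

Lemma divdiff_int_vandermonde n x m : increasing_nodes n x ->
  (forall j, is_int (x j)) -> (forall j, is_int (m j)) ->
  is_int (divdiff n x m * vandermonde n x).
Proof.
  intros Hx Hxz Hmz. unfold divdiff.
  enough (H : forall k, (k <= S n)%nat ->
            is_int (sumR k (fun i => m i / node_weight n x i) * vandermonde n x)) by auto.
  induction k; intros Hk; simpl; [rewrite Rmult_0_l; apply (is_int_IZR 0)|].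
  rewrite Rmult_plus_distr_r. apply is_int_plus; [apply IHk; lia|].
  destruct (vandermonde_weight_multiple n x Hxz k ltac:(lia)) as [r [Hr ->]].
  replace (m k / node_weight n x k * (r * node_weight n x k)) with (m k * r).
  - apply is_int_mult; auto.
  - field. apply node_weight_neq0; auto; lia.
Qed.

Lemma Rabs_prodR_ge1 m F : (forall j, (j < m)%nat -> 1 <= Rabs (F j)) -> 1 <= Rabs (prodR m F).
Proof.
  induction m; simpl; intros H; [rewrite Rabs_R1; lra|].
  rewrite Rabs_mult.
  assert (1 <= Rabs (prodR m F)) by (apply IHm; intros; apply H; lia).
  assert (1 <= Rabs (F m)) by (apply H; lia).
  nra.
Qed.

Lemma sumR_abs_bound m F d : (forall j, (j < m)%nat -> Rabs (F j) <= d) ->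
  Rabs (sumR m F) <= INR m * d.
Proof.
  induction m; cbn [sumR]; intros H; [rewrite Rabs_R0; simpl; lra|].
  eapply Rle_trans; [apply Rabs_triang|]. rewrite S_INR.
  assert (Rabs (sumR m F) <= INR m * d) by (apply IHm; intros; apply H; lia).
  assert (Rabs (F m) <= d) by (apply H; lia).
  lra.
Qed.

Lemma node_weight_int_ge1 n x i : increasing_nodes n x -> (forall j, is_int (x j)) ->
  (i <= n)%nat -> 1 <= Rabs (node_weight n x i).
Proof.
  intros Hx Hxz Hi. apply Rabs_prodR_ge1. intros j Hj.
  destruct (Nat.eqb_spec j i); [rewrite Rabs_R1; lra|].
  apply is_int_abs_ge1; [apply is_int_minus; auto|apply (increasing_nodes_neq n); auto; lia].
Qed.

Lemma divdiff_int_nodes_bound n x e d : increasing_nodes n x -> (forall j, is_int (x j)) ->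
  (forall i, (i <= n)%nat -> Rabs (e i) <= d) -> Rabs (divdiff n x e) <= INR (S n) * d.
Proof.
  intros Hx Hxz He. apply sumR_abs_bound. intros j Hj.
  assert (Hw := node_weight_int_ge1 n x j Hx Hxz ltac:(lia)).
  assert (He' := He j ltac:(lia)).
  unfold Rdiv. rewrite Rabs_mult, Rabs_inv.
  assert (0 < / Rabs (node_weight n x j) <= 1)
    by (split; [apply Rinv_0_lt_compat; lra|rewrite <- Rinv_1; apply Rinv_le_contravar; lra]).
  assert (0 <= Rabs (e j)) by apply Rabs_pos.
  nra.
Qed.

Lemma divdiff_minus n x y e :
  divdiff n x (fun i => y i - e i) = divdiff n x y - divdiff n x e.
Proof. unfold divdiff. induction (S n); simpl; [|rewrite IHn0]; unfold Rdiv; ring. Qed.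

(* The divided difference [Dm] of the nearest integers is within [(n+1) delta] of
   [f^(n)(xi)/n!], hence nonzero, and [Dm] times the Vandermonde product is an integer. *)
Lemma integer_nodes_spread (f : R -> R) lo hi n (z m : nat -> Z) (delta lam Lam : R) :
  (forall j t, lo < t < hi -> ex_derive (Derive_n f j) t) ->
  (forall i, (i < n)%nat -> (z i < z (S i))%Z) ->
  lo < IZR (z O) -> IZR (z n) < hi ->
  (forall i, (i <= n)%nat -> Rabs (f (IZR (z i)) - IZR (m i)) < delta) ->
  (forall t, IZR (z O) <= t <= IZR (z n) -> lam <= Rabs (Derive_n f n t) <= Lam) ->
  INR (S n) * delta < lam / INR (fact n) ->
  1 <= (Lam / INR (fact n) + INR (S n) * delta) * (IZR (z n) - IZR (z O)) ^ triangular n.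
Proof.
  intros Hf Hz Hlo Hhi Hm Hb Hd.
  set (x i := IZR (z i)). set (e i := f (x i) - IZR (m i)).
  assert (Hx : increasing_nodes n x) by (intros i Hi; apply IZR_lt, Hz; auto).
  assert (Hxz : forall j, is_int (x j)) by (intros; apply is_int_IZR).
  assert (Hfact : 0 < INR (fact n)) by apply INR_fact_lt_0.
  destruct (divdiff_mvt f lo hi n x Hf Hx Hlo Hhi) as [xi [Hxi Hmvt]].
  set (Df := divdiff n x (fun i => f (x i))) in Hmvt.
  assert (HDf : lam / INR (fact n) <= Rabs Df <= Lam / INR (fact n)).
  { replace Df with (Derive_n f n xi / INR (fact n)) by (rewrite Hmvt; field; lra).
    unfold Rdiv. rewrite Rabs_mult, Rabs_inv, (Rabs_right (INR (fact n))) by lra.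
    assert (0 < / INR (fact n)) by (apply Rinv_0_lt_compat; lra).
    destruct (Hb xi Hxi). split; apply Rmult_le_compat_r; lra. }
  assert (He : Rabs (divdiff n x e) <= INR (S n) * delta)
    by (apply divdiff_int_nodes_bound; auto; intros i Hi; left; apply Hm; auto).
  set (Dm := divdiff n x (fun i => IZR (m i))).
  assert (EDm : Dm = Df - divdiff n x e).
  { unfold Dm, Df. rewrite <- divdiff_minus. unfold divdiff, e. apply sumR_ext.
    intros; f_equal; ring. }
  assert (HDm : Rabs Dm <= Lam / INR (fact n) + INR (S n) * delta).
  { rewrite EDm. eapply Rle_trans; [apply Rabs_triang|]. rewrite Rabs_Ropp. lra. }
  assert (HDm0 : Dm <> 0).
  { intros H0. assert (Df = divdiff n x e) by lra. rewrite H in HDf. lra. }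
  destruct (vandermonde_bound n n x Hx (le_n n)) as [HV0 HV].
  assert (Hint : 1 <= Rabs (Dm * vandermonde n x)).
  { apply is_int_abs_ge1; [apply divdiff_int_vandermonde; auto; intros; apply is_int_IZR|].
    apply Rmult_integral_contrapositive; split; lra. }
  rewrite Rabs_mult, (Rabs_right (vandermonde n x)) in Hint by lra.
  assert (0 <= Rabs Dm) by apply Rabs_pos.
  eapply Rle_trans; [apply Hint|apply Rmult_le_compat; unfold x in *; lra].
Qed.

(** * The k-th derivative test *)

Lemma StronglySorted_filter (f : Z -> bool) l :
  StronglySorted Z.lt l -> StronglySorted Z.lt (filter f l).
Proof.
  induction 1 as [|a l _ IH Ha]; simpl; [constructor|].
  destruct (f a); [constructor|]; auto.
  rewrite Forall_forall in *. intros x Hx. apply filter_In in Hx. apply Ha; tauto.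
Qed.

Lemma StronglySorted_nth_lt l : StronglySorted Z.lt l ->
  forall i j, (i < j)%nat -> (j < length l)%nat -> (nth i l 0 < nth j l 0)%Z.
Proof.
  induction 1 as [|a l _ IH Ha]; intros i j Hij Hj; simpl in Hj; [lia|].
  destruct j as [|j]; [lia|]. destruct i as [|i]; simpl.
  - rewrite Forall_forall in Ha. apply Ha, nth_In. lia.
  - apply IH; lia.
Qed.

Lemma StronglySorted_nth_ge l : StronglySorted Z.lt l ->
  forall i, (i < length l)%nat -> (nth 0 l 0 + Z.of_nat i <= nth i l 0)%Z.
Proof.
  intros Hs i. induction i; intros Hi; [simpl; lia|].
  assert (H := StronglySorted_nth_lt l Hs i (S i) ltac:(lia) Hi). specialize (IHi ltac:(lia)). lia.
Qed.

Lemma StronglySorted_length_le_span l (D : Z) : StronglySorted Z.lt l ->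
  (forall x y, In x l -> In y l -> (y - x < D)%Z) -> (0 < D)%Z -> (Z.of_nat (length l) <= D)%Z.
Proof.
  intros Hs H HD. destruct (length l) as [|n] eqn:E; [lia|].
  assert (A := StronglySorted_nth_ge l Hs n ltac:(lia)).
  assert (B := H (nth 0 l 0%Z) (nth n l 0%Z) ltac:(apply nth_In; lia) ltac:(apply nth_In; lia)).
  lia.
Qed.

Lemma length_le_of_spread (l : list Z) (k : nat) (h M : R) :
  (1 <= k)%nat -> 0 < h -> 0 <= M ->
  (forall s, (s + k < length l)%nat -> h <= IZR (nth (s + k) l 0%Z) - IZR (nth s l 0%Z)) ->
  (forall s, (s < length l)%nat -> M <= IZR (nth s l 0%Z) <= 2 * M) ->
  INR (length l) <= INR k * (M / h) + INR k.
Proof.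
  intros Hk Hh HM Hgap Hr.
  assert (0 <= INR k) by apply pos_INR.
  assert (0 <= M / h) by (apply Rdiv_le_0_compat; lra).
  destruct (length l) as [|n] eqn:Hn; [simpl; nra|].
  set (J := (n / k)%nat).
  assert (HJk : (J * k <= n)%nat) by (unfold J; rewrite Nat.mul_comm; apply Nat.Div0.mul_div_le).
  assert (HJ : forall j, (j <= J)%nat ->
            INR j * h <= IZR (nth (j * k) l 0%Z) - IZR (nth 0 l 0%Z)).
  { induction j; intros Hj; [simpl; lra|].
    assert (Hs := Hgap (j * k)%nat ltac:(nia)).
    replace (S j * k)%nat with (j * k + k)%nat by lia. rewrite S_INR.
    assert (IH := IHj ltac:(lia)). lra. }
  assert (A := HJ J (le_n J)).
  assert (B1 := Hr (J * k)%nat ltac:(lia)). assert (B2 := Hr O ltac:(lia)).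
  assert (INR J <= M / h).
  { apply (Rmult_le_reg_r h); auto. unfold Rdiv. rewrite Rmult_assoc, Rinv_l; lra. }
  assert (Hcover : (S n <= k * J + k)%nat).
  { unfold J. assert (n = k * (n / k) + n mod k)%nat by (apply Nat.div_mod; lia).
    assert (n mod k < k)%nat by (apply Nat.mod_upper_bound; lia). lia. }
  apply le_INR in Hcover. rewrite plus_INR, mult_INR in Hcover. nra.
Qed.

Lemma Rpower_pos x y : 0 < Rpower x y.
Proof. apply exp_pos. Qed.

Lemma Rpower_root_pow X q : (1 <= q)%nat -> 0 < X -> Rpower X (/ INR q) ^ q = X.
Proof.
  intros Hq HX. rewrite <- Rpower_pow, Rpower_mult, Rinv_l by (apply Rpower_pos || (apply not_0_INR; lia)).
  apply Rpower_1; auto.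
Qed.

Lemma pow_le_inv a b q : 0 <= a -> 0 <= b -> (1 <= q)%nat -> a ^ q <= b ^ q -> a <= b.
Proof.
  intros Ha Hb Hq H. destruct (Rle_lt_dec a b) as [|Hba]; auto.
  destruct q as [|q]; [lia|]. simpl in H.
  assert (b * b ^ q < a * a ^ q); [|lra].
  apply Rle_lt_trans with (b * a ^ q).
  - apply Rmult_le_compat_l; [lra|apply pow_incr; lra].
  - apply Rmult_lt_compat_r; [apply pow_lt|]; lra.
Qed.

Lemma inv_root_le (X H : R) (q : nat) : (1 <= q)%nat -> 0 < X -> 0 <= H -> 1 <= X * H ^ q ->
  / Rpower X (/ INR q) <= H.
Proof.
  intros Hq HX HH H1. set (r := Rpower X (/ INR q)).
  assert (Hr : 0 < r) by apply Rpower_pos.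
  apply (pow_le_inv _ _ q); auto; [left; apply Rinv_0_lt_compat; auto|].
  rewrite pow_inv. unfold r. rewrite Rpower_root_pow by auto.
  apply (Rmult_le_reg_l X); auto. rewrite Rinv_r; lra.
Qed.

Definition hits (f : R -> R) (M delta : R) (l : list Z) : Prop :=
  StronglySorted Z.lt l /\
  forall x, In x l -> M <= IZR x <= 2 * M /\ dist_int (f (IZR x)) < delta.

Lemma dist_int_lt_near t delta : dist_int t < delta -> exists m : Z, Rabs (t - IZR m) < delta.
Proof.
  unfold dist_int, Rmin. intros H. destruct (base_Int_part t) as [A B].
  destruct (Rle_dec _ _).
  - exists (Int_part t). rewrite Rabs_right; lra.
  - exists (Int_part t + 1)%Z. rewrite plus_IZR, Rabs_left1; lra.
Qed.

Section DerivativeTest.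

Variables (f : R -> R) (M delta lam Lam : R) (k : nat) (l : list Z).
Hypothesis Hk : (1 <= k)%nat.
Hypothesis HM : 1 < M.
Hypothesis Hsmooth : forall j t, 1 < t -> ex_derive (Derive_n f j) t.
Hypothesis Hbounds : forall t, M <= t <= 2 * M -> lam <= Rabs (Derive_n f k t) <= Lam.
Hypothesis Hdelta0 : 0 < delta.
Hypothesis Hdelta : INR (S k) * delta < lam / INR (fact k).
Hypothesis Hhits : hits f M delta l.

Lemma hits_spread s : (s + k < length l)%nat ->
  1 <= (Lam / INR (fact k) + INR (S k) * delta) *
       (IZR (nth (s + k) l 0%Z) - IZR (nth s l 0%Z)) ^ triangular k.
Proof.
  intros Hs. destruct Hhits as [Hsort Hin].
  set (z i := nth (s + i) l 0%Z).
  assert (Hr : forall i, (i <= k)%nat -> M <= IZR (z i) <= 2 * M /\ dist_int (f (IZR (z i))) < delta)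
    by (intros; apply Hin, nth_In; lia).
  assert (Hm : forall i, exists m : Z, (i <= k)%nat -> Rabs (f (IZR (z i)) - IZR m) < delta).
  { intros i. destruct (Nat.le_gt_cases i k) as [Hi|]; [|exists 0%Z; lia].
    destruct (dist_int_lt_near (f (IZR (z i))) delta) as [m Hm]; [apply Hr; auto|].
    exists m; auto. }
  apply choice in Hm. destruct Hm as [m Hm].
  assert (Hz0 := Hr O ltac:(lia)). assert (Hzk := Hr k (le_n k)).
  replace (nth s l 0%Z) with (z O) by (unfold z; rewrite Nat.add_0_r; reflexivity).
  apply (integer_nodes_spread f 1 (2 * M + 1) k z m delta lam Lam); auto.
  - intros j t Ht. apply Hsmooth. lra.
  - intros i Hi. apply StronglySorted_nth_lt; auto; lia.
  - lra.
  - lra.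
  - intros t Ht. apply Hbounds. lra.
Qed.

Lemma count_le_of_derivative_bounds :
  INR (length l) <=
  INR k * (M * Rpower (Lam / INR (fact k) + INR (S k) * delta) (/ INR (triangular k))) + INR k.
Proof.
  set (X := Lam / INR (fact k) + INR (S k) * delta).
  assert (HX : 0 < X).
  { assert (Hfact : 0 < INR (fact k)) by apply INR_fact_lt_0.
    assert (0 < INR (S k) * delta) by (apply Rmult_lt_0_compat; [apply lt_0_INR; lia|auto]).
    assert (lam <= Lam) by (destruct (Hbounds M); lra).
    assert (lam / INR (fact k) <= Lam / INR (fact k))
      by (apply Rmult_le_compat_r; [left; apply Rinv_0_lt_compat|]; lra).
    unfold X; lra. }
  rewrite <- (Rinv_inv (Rpower X _)).
  apply length_le_of_spread; auto; try lra.
  - apply Rinv_0_lt_compat, Rpower_pos.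
  - intros s Hs. apply inv_root_le; auto.
    + destruct k; [lia|simpl; lia].
    + assert (IZR (nth s l 0%Z) < IZR (nth (s + k) l 0%Z))
        by (apply IZR_lt, StronglySorted_nth_lt; [apply Hhits|lia|auto]).
      lra.
    + apply hits_spread; auto.
  - intros s Hs. apply (proj2 Hhits), nth_In; auto.
Qed.

End DerivativeTest.

(** * Derivatives of f_N *)

Definition fL (L t : R) : R := (L + ln (t - 1)) / ln t.

(* [(c, p, n, m, e)] encodes [c * B^e / ((t - 1)^p * t^n * (ln t)^m)] with [B = L + ln (t - 1)]. *)
Definition term := (Z * nat * nat * nat * bool)%type.

Definition eval_term (L : R) (tau : term) (t : R) : R :=
  let '(c, p, n, m, e) := tau in
  IZR c * (if e then L + ln (t - 1) else 1) * (/ (t - 1)) ^ p * (/ t) ^ n * (/ ln t) ^ m.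

Definition eval_terms (L : R) (l : list term) (t : R) : R :=
  fold_right (fun tau acc => eval_term L tau t + acc) 0 l.

Definition derive_term (tau : term) : list term :=
  let '(c, p, n, m, e) := tau in
  (if e then (c, S p, n, m, false) :: nil else nil) ++
  ((- c * Z.of_nat p)%Z, S p, n, m, e) :: ((- c * Z.of_nat n)%Z, p, S n, m, e) ::
  ((- c * Z.of_nat m)%Z, p, S n, S m, e) :: nil.

Definition same_monomial (a b : term) : bool :=
  let '(_, p, n, m, e) := a in let '(_, p', n', m', e') := b in
  Nat.eqb p p' && Nat.eqb n n' && Nat.eqb m m' && Bool.eqb e e'.

Fixpoint insert_term (tau : term) (l : list term) : list term :=
  match l with
  | nil => tau :: nil
  | t' :: l' =>
      if same_monomial t' tau then
        (let '(c, p, n, m, e) := t' in let '(c', _, _, _, _) := tau in ((c + c')%Z, p, n, m, e)) :: l'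
      else t' :: insert_term tau l'
  end.

Definition collect_terms (l : list term) : list term := fold_right insert_term nil l.

Fixpoint fL_derivative (k : nat) : list term :=
  match k with
  | O => (1%Z, O, O, 1%nat, true) :: nil
  | S k => collect_terms (flat_map derive_term (fL_derivative k))
  end.

Lemma eval_terms_app L l1 l2 t : eval_terms L (l1 ++ l2) t = eval_terms L l1 t + eval_terms L l2 t.
Proof. induction l1; simpl; [ring|]. unfold eval_terms in *; simpl. rewrite IHl1. ring. Qed.

Lemma eval_terms_insert L tau l t :
  eval_terms L (insert_term tau l) t = eval_term L tau t + eval_terms L l t.
Proof.
  induction l as [|a l IH]; simpl; [reflexivity|].
  destruct (same_monomial a tau) eqn:Hk.
  - destruct a as [[[[c p] n] m] e], tau as [[[[c' p'] n'] m'] e'].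
    simpl in Hk. apply andb_prop in Hk as [Hk H4]. apply andb_prop in Hk as [Hk H3].
    apply andb_prop in Hk as [H1 H2].
    apply Nat.eqb_eq in H1, H2, H3. apply Bool.eqb_prop in H4. subst.
    unfold eval_terms; simpl. rewrite plus_IZR. ring.
  - unfold eval_terms in *; simpl. rewrite IH. ring.
Qed.

Lemma eval_collect_terms L l t : eval_terms L (collect_terms l) t = eval_terms L l t.
Proof. induction l; simpl; [reflexivity|]. rewrite eval_terms_insert, IHl. reflexivity. Qed.

Lemma is_derive_inv_pow (g : R -> R) g' t p : is_derive g t g' -> g t <> 0 ->
  is_derive (fun y => (/ g y) ^ p) t (- INR p * g' * (/ g t) ^ S p).
Proof.
  intros Hg Hg0.
  replace (- INR p * g' * (/ g t) ^ S p)
    with (INR p * (- g' / g t ^ 2) * (/ g t) ^ Init.Nat.pred p).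
  - apply (is_derive_pow (fun y => / g y)). apply (is_derive_inv g); auto.
  - destruct p; simpl; [ring|field; auto].
Qed.

Lemma is_derive_mult_eq (f g : R -> R) x a b v : is_derive f x a -> is_derive g x b ->
  v = a * g x + f x * b -> is_derive (fun y => f y * g y) x v.
Proof. intros Hf Hg ->. apply (is_derive_mult f g); auto. intros; apply Rmult_comm. Qed.

Lemma is_derive_eval_term L tau t : 1 < t ->
  is_derive (eval_term L tau) t (eval_terms L (derive_term tau) t).
Proof.
  intros Ht. destruct tau as [[[[c p] n] m] e].
  assert (Hl : 0 < ln t) by (rewrite <- ln_1; apply ln_increasing; lra).
  assert (HB : is_derive (fun y => if e then L + ln (y - 1) else 1) t (if e then / (t - 1) else 0))
    by (destruct e; auto_derive; try lra; field; lra).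
  assert (P1 := is_derive_inv_pow (fun y => y - 1) 1 t p ltac:(auto_derive; auto; ring) ltac:(lra)).
  assert (P2 := is_derive_inv_pow (fun y => y) 1 t n ltac:(auto_derive; auto; ring) ltac:(lra)).
  assert (P3 := is_derive_inv_pow ln (/ t) t m ltac:(apply is_derive_ln; lra) ltac:(lra)).
  unfold eval_term.
  eapply is_derive_mult_eq;
    [eapply is_derive_mult_eq;
       [eapply is_derive_mult_eq; [apply is_derive_scal, HB|apply P1|reflexivity]
       |apply P2|reflexivity]
    |apply P3|].
  unfold derive_term, eval_terms.
  destruct e; simpl; rewrite !mult_IZR, !opp_IZR, <- !INR_IZR_INZ; field; lra.
Qed.

Lemma is_derive_eval_terms L l t : 1 < t ->
  is_derive (eval_terms L l) t (eval_terms L (collect_terms (flat_map derive_term l)) t).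
Proof.
  intros Ht. rewrite eval_collect_terms. induction l as [|a l IH]; simpl.
  - apply (is_derive_const 0).
  - rewrite eval_terms_app. apply (is_derive_plus (eval_term L a)); auto.
    apply is_derive_eval_term; auto.
Qed.


Lemma Derive_n_fL L k t : 1 < t -> Derive_n (fL L) k t = eval_terms L (fL_derivative k) t.
Proof.
  revert t; induction k; intros t Ht.
  - assert (0 < ln t) by (rewrite <- ln_1; apply ln_increasing; lra).
    unfold fL, eval_terms, eval_term; simpl. field. lra.
  - simpl Derive_n. rewrite (Derive_ext_loc _ (eval_terms L (fL_derivative k))).
    + apply is_derive_unique, is_derive_eval_terms; auto.
    + apply (locally_interval _ t 1 p_infty); simpl; auto.
Qed.

Lemma ex_derive_Derive_n_fL L j t : 1 < t -> ex_derive (Derive_n (fL L) j) t.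
Proof.
  intros Ht. apply (ex_derive_ext_loc (eval_terms L (fL_derivative j))).
  - apply (locally_interval _ t 1 p_infty); simpl; auto.
    intros y Hy _. symmetry. apply Derive_n_fL; auto.
  - eexists. apply is_derive_eval_terms; auto.
Qed.

Definition well_shaped_term (k : nat) (tau : term) : bool :=
  let '(c, p, n, m, e) := tau in
  Z.eqb c 0 || (Nat.eqb (p + n) k && Nat.leb 1 m &&
                (if e then Nat.eqb p 0 && Nat.leb 2 m && Z.leb 0 c else true)).

Definition term_lead_lo (tau : term) : Z :=
  let '(c, _, _, m, e) := tau in if e && Nat.eqb m 2 then c else 0%Z.
Definition term_lead_hi (tau : term) : Z :=
  let '(c, _, _, _, e) := tau in if e then c else 0%Z.
Definition term_tail_log (tau : term) : Z :=
  let '(c, _, _, m, e) := tau in if negb e && Nat.eqb m 1 then Z.abs c else 0%Z.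
Definition term_tail_const (tau : term) : Z :=
  let '(c, _, _, m, e) := tau in if negb e && negb (Nat.eqb m 1) then Z.abs c else 0%Z.

Definition sumZ (g : term -> Z) (l : list term) : Z :=
  fold_right (fun tau acc => (g tau + acc)%Z) 0%Z l.

Lemma scaled_monomial t k p n m : 1 < t -> (p + n = k)%nat ->
  t ^ k * ln t ^ 2 * ((/ (t - 1)) ^ p * (/ t) ^ n * (/ ln t) ^ m) =
  (t / (t - 1)) ^ p * (ln t ^ 2 * (/ ln t) ^ m).
Proof.
  intros Ht <-. unfold Rdiv. rewrite pow_add, Rpow_mult_distr.
  assert (t ^ n * (/ t) ^ n = 1) by (rewrite <- Rpow_mult_distr, Rinv_r, pow1; lra).
  transitivity ((t ^ n * (/ t) ^ n) * (t ^ p * (/ (t - 1)) ^ p * (ln t ^ 2 * (/ ln t) ^ m)));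
    [ring|rewrite H; ring].
Qed.

Lemma log_weight_ge2 u m : 1 <= u -> (2 <= m)%nat ->
  u ^ 2 * (/ u) ^ m = (/ u) ^ (m - 2) /\ 0 <= (/ u) ^ (m - 2) <= 1.
Proof.
  intros Hu Hm. replace m with (2 + (m - 2))%nat at 1 by lia. rewrite pow_add. split.
  - simpl. field. lra.
  - assert (0 < / u <= 1) by (split; [apply Rinv_0_lt_compat|rewrite <- Rinv_1; apply Rinv_le_contravar]; lra).
    split; [apply pow_le; lra|]. rewrite <- (pow1 (m - 2)). apply pow_incr; lra.
Qed.

Lemma log_weight_bound u m : 1 <= u -> (1 <= m)%nat ->
  0 <= u ^ 2 * (/ u) ^ m /\ (if Nat.eqb m 1 then u ^ 2 * (/ u) ^ m <= u else u ^ 2 * (/ u) ^ m <= 1).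
Proof.
  intros Hu Hm. destruct (Nat.eqb_spec m 1) as [->|].
  - replace (u ^ 2 * (/ u) ^ 1) with u by (field; lra). lra.
  - destruct (log_weight_ge2 u m Hu ltac:(lia)) as [-> Hw01]. lra.
Qed.

Lemma scaled_term_split L k tau t G : 3 <= t -> (t / (t - 1)) ^ k <= G ->
  well_shaped_term k tau = true ->
  exists a b, t ^ k * ln t ^ 2 * eval_term L tau t = (L + ln (t - 1)) * a + b /\
    IZR (term_lead_lo tau) <= a <= IZR (term_lead_hi tau) /\
    Rabs b <= G * (IZR (term_tail_log tau) * ln t + IZR (term_tail_const tau)).
Proof.
  intros Ht HG Hshape. destruct tau as [[[[c p] n] m] e].
  set (u := ln t). set (rho := t / (t - 1)).
  assert (Hu : 1 <= u).
  { unfold u. rewrite <- (ln_exp 1). apply ln_le; [apply exp_pos|].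
    assert (exp 1 <= 3) by apply exp_le_3. lra. }
  assert (Hrho : 1 <= rho)
    by (unfold rho; apply (Rmult_le_reg_r (t - 1)); [lra|]; unfold Rdiv; rewrite Rmult_assoc, Rinv_l; lra).
  unfold well_shaped_term in Hshape. destruct (Z.eqb_spec c 0) as [->|Hc0].
  { exists 0, 0. unfold eval_term, term_lead_lo, term_lead_hi, term_tail_log, term_tail_const.
    rewrite Rabs_R0. destruct e, (Nat.eqb m 2), (Nat.eqb m 1); simpl; split; lra. }
  apply andb_prop in Hshape as [Hshape He]. apply andb_prop in Hshape as [Hpn Hm].
  apply Nat.eqb_eq in Hpn. apply Nat.leb_le in Hm.
  assert (Hcore := scaled_monomial t k p n m ltac:(lra) Hpn). fold u rho in Hcore.
  unfold eval_term, term_lead_lo, term_lead_hi, term_tail_log, term_tail_const. fold u.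
  destruct e; simpl.
  - apply andb_prop in He as [He Hc]. apply andb_prop in He as [Hp0 Hm2].
    apply Nat.eqb_eq in Hp0. apply Nat.leb_le in Hm2. apply Z.leb_le, IZR_le in Hc. subst p.
    destruct (log_weight_ge2 u m Hu Hm2) as [Hw Hw01].
    exists (IZR c * (/ u) ^ (m - 2)), 0. split; [|split].
    + transitivity (IZR c * (L + ln (t - 1)) * (t ^ k * u ^ 2 * ((/ (t - 1)) ^ 0 * (/ t) ^ n * (/ u) ^ m)));
        [simpl; ring|]. rewrite Hcore, Hw. simpl; ring.
    + destruct (Nat.eqb_spec m 2) as [->|]; simpl; nra.
    + rewrite Rabs_R0. lra.
  - assert (Hrp : 0 <= rho ^ p <= G).
    { split; [apply pow_le; lra|]. apply Rle_trans with (rho ^ k); auto. apply Rle_pow; auto; lia. }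
    assert (Hw := log_weight_bound u m Hu Hm).
    set (w := u ^ 2 * (/ u) ^ m) in *.
    exists 0, (IZR c * (rho ^ p * w)). split; [|split; [lra|]].
    + transitivity (IZR c * (t ^ k * u ^ 2 * ((/ (t - 1)) ^ p * (/ t) ^ n * (/ u) ^ m)));
        [ring|]. rewrite Hcore. ring.
    + rewrite Rabs_mult, Rabs_Zabs, (Rabs_right (rho ^ p * w)) by nra.
      assert (0 <= IZR (Z.abs c)) by (apply IZR_le; lia).
      assert (rho ^ p * w <= G * (if Nat.eqb m 1 then u else 1))
        by (destruct (Nat.eqb m 1); apply Rmult_le_compat; lra).
      destruct (Nat.eqb m 1); simpl; nra.
Qed.

Lemma scaled_terms_split L k l t G : 3 <= t -> (t / (t - 1)) ^ k <= G ->
  forallb (well_shaped_term k) l = true ->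
  exists a b, t ^ k * ln t ^ 2 * eval_terms L l t = (L + ln (t - 1)) * a + b /\
    IZR (sumZ term_lead_lo l) <= a <= IZR (sumZ term_lead_hi l) /\
    Rabs b <= G * (IZR (sumZ term_tail_log l) * ln t + IZR (sumZ term_tail_const l)).
Proof.
  intros Ht HG. induction l as [|tau l IH]; intros Hs.
  - exists 0, 0. rewrite Rabs_R0. unfold eval_terms; simpl. split; [ring|lra].
  - cbn [forallb] in Hs. apply andb_prop in Hs as [Htau Hl].
    destruct (scaled_term_split L k tau t G Ht HG Htau) as [a1 [b1 [E1 [A1 B1]]]].
    destruct (IH Hl) as [a2 [b2 [E2 [A2 B2]]]].
    exists (a1 + a2), (b1 + b2). unfold sumZ, eval_terms in *; cbn [fold_right].
    rewrite !plus_IZR. split; [|split; [lra|]].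
    + rewrite Rmult_plus_distr_l, E1, E2. ring.
    + eapply Rle_trans; [apply Rabs_triang|lra].
Qed.

Definition negate_term (tau : term) : term :=
  let '(c, p, n, m, e) := tau in ((- c)%Z, p, n, m, e).

(* The sign [(-1)^k] makes the coefficients of the [B] terms nonnegative. *)
Definition signed_derivative (k : nat) : list term :=
  if Nat.even k then fL_derivative k else map negate_term (fL_derivative k).

Definition lead_lo k := sumZ term_lead_lo (signed_derivative k).
Definition lead_hi k := sumZ term_lead_hi (signed_derivative k).
Definition tail_log_coef k := sumZ term_tail_log (signed_derivative k).
Definition tail_const_coef k := sumZ term_tail_const (signed_derivative k).

Lemma eval_terms_negate L l t : eval_terms L (map negate_term l) t = - eval_terms L l t.
Proof.
  induction l as [|[[[[c p] n] m] e] l IH]; unfold eval_terms in *; simpl; [ring|].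
  rewrite IH, opp_IZR. ring.
Qed.

Lemma ratio_pow_le t k : 10001 <= t -> (k <= 6)%nat -> (t / (t - 1)) ^ k <= 1.001.
Proof.
  intros Ht Hk.
  assert (H1 : 1 <= t / (t - 1) <= 1.0001)
    by (split; apply (Rmult_le_reg_r (t - 1)); try lra; unfold Rdiv; rewrite Rmult_assoc, Rinv_l; lra).
  apply Rle_trans with (1.0001 ^ k); [apply pow_incr; lra|].
  apply Rle_trans with (1.0001 ^ 6); [apply Rle_pow; [lra|lia]|simpl; lra].
Qed.

Lemma scaled_Derive_n_fL L k t :
  forallb (well_shaped_term k) (signed_derivative k) = true -> 10001 <= t -> (k <= 6)%nat ->
  exists a b, t ^ k * ln t ^ 2 * Rabs (Derive_n (fL L) k t) = Rabs ((L + ln (t - 1)) * a + b) /\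
    IZR (lead_lo k) <= a <= IZR (lead_hi k) /\
    Rabs b <= 1.001 * (IZR (tail_log_coef k) * ln t + IZR (tail_const_coef k)).
Proof.
  intros Hs Ht Hk.
  destruct (scaled_terms_split L k (signed_derivative k) t 1.001) as [a [b [E1 E2]]];
    auto; [lra|apply ratio_pow_le; auto|].
  exists a, b. split; auto. rewrite <- E1, Derive_n_fL by lra.
  assert (0 <= t ^ k * ln t ^ 2) by (apply Rmult_le_pos; [apply pow_le; lra|apply pow2_ge_0]).
  rewrite Rabs_mult, (Rabs_right (t ^ k * ln t ^ 2)) by lra. f_equal.
  unfold signed_derivative. destruct (Nat.even k); auto. rewrite eval_terms_negate, Rabs_Ropp. auto.
Qed.


Lemma coefficients k : (1 <= k <= 6)%nat ->
  forallb (well_shaped_term k) (signed_derivative k) = true /\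
  lead_lo k = nth (k - 1) [1; 1; 2; 6; 24; 120]%Z 0%Z /\
  lead_hi k = nth (k - 1) [1; 3; 14; 88; 694; 6578]%Z 0%Z /\
  tail_log_coef k = lead_lo k /\
  tail_const_coef k = nth (k - 1) [0; 2; 12; 82; 670; 6458]%Z 0%Z.
Proof. intros Hk. destruct k as [|[|[|[|[|[|[|k]]]]]]]; try lia; vm_compute; repeat split. Qed.

(** * Counting hits in the three regimes *)

Lemma near_two_increment x y : 3 <= x -> x < y ->
  (y - x) / (2 * y) <= 1 - x * x * (y - 1) / ((x - 1) * (y * y)).
Proof.
  intros Hx Hxy. apply (Rmult_le_reg_r (2 * y * y * (x - 1))); [nra|].
  replace ((y - x) / (2 * y) * (2 * y * y * (x - 1))) with ((y - x) * y * (x - 1)) by (field; lra).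
  replace ((1 - x * x * (y - 1) / ((x - 1) * (y * y))) * (2 * y * y * (x - 1)))
    with (2 * (y * y * (x - 1) - x * x * (y - 1))) by (field; nra).
  assert (0 <= (y - x) * (x * y - 2 * x - y)) by (apply Rmult_le_pos; nra).
  nra.
Qed.

(* [2 ln x - ln (x - 1)] increases by at least [(y - x) / (2 y)] from [x] to [y]. *)
Lemma near_two_close (N x y : R) : 0 < N -> 3 <= x -> x < y ->
  Rabs (ln N - (2 * ln x - ln (x - 1))) < 2 / N ->
  Rabs (ln N - (2 * ln y - ln (y - 1))) < 2 / N -> ln y < ln N + 1 -> y - x < 24.
Proof.
  intros HN Hx Hxy Ax Ay Hy. apply Rabs_def2 in Ax, Ay.
  set (A := (2 * ln y - ln (y - 1)) - (2 * ln x - ln (x - 1))).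
  assert (HA : exp (- A) = x * x * (y - 1) / ((x - 1) * (y * y))).
  { rewrite <- (exp_ln (x * x * (y - 1) / ((x - 1) * (y * y)))) by (apply Rdiv_lt_0_compat; nra).
    f_equal. unfold Rdiv.
    rewrite !ln_mult, ln_Rinv, !ln_mult by (try apply Rinv_0_lt_compat; nra). unfold A. ring. }
  assert (H1 : 1 - A <= exp (- A)) by (replace (1 - A) with (1 + - A) by ring; apply exp_ineq1_le).
  assert (H2 := near_two_increment x y Hx Hxy).
  assert (Hy3 : y < 3 * N).
  { assert (y < exp (ln N + 1)) by (rewrite <- (exp_ln y) at 1 by lra; apply exp_increasing; auto).
    rewrite exp_plus, exp_ln in H by auto. assert (exp 1 <= 3) by apply exp_le_3. nra. }
  assert (Hgap : (y - x) / (2 * y) < 4 / N) by (unfold A in *; lra).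
  apply (Rmult_lt_compat_r (2 * y)) in Hgap; [|lra].
  replace ((y - x) / (2 * y) * (2 * y)) with (y - x) in Hgap by (field; lra).
  replace (4 / N * (2 * y)) with (8 * (y / N)) in Hgap by (field; lra).
  assert (y / N < 3) by (apply (Rmult_lt_reg_r N); auto; unfold Rdiv; rewrite Rmult_assoc, Rinv_l; lra).
  lra.
Qed.

Lemma ln_2_le_1 : ln 2 <= 1.
Proof.
  rewrite <- ln_exp with 1. apply ln_le; [lra|].
  assert (1 + 1 <= exp 1) by apply exp_ineq1_le. lra.
Qed.

Lemma ln_pred_ge x : 2 <= x -> ln x - 1 <= ln (x - 1).
Proof.
  intros Hx. assert (ln x <= ln (2 * (x - 1))) by (apply ln_le; lra).
  rewrite ln_mult in H by lra. assert (H2 := ln_2_le_1). lra.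
Qed.

Lemma ln_ge_one_plus x : 0 < x -> 1 + ln x <= x.
Proof. intros Hx. rewrite <- (exp_ln x) at 2 by auto. apply exp_ineq1_le. Qed.

Lemma Rdiv_lt_cross a b c d : 0 < b -> 0 < d -> a * d < c * b -> a / b < c / d.
Proof.
  intros Hb Hd H. apply (Rmult_lt_reg_r (b * d)); [nra|].
  replace (a / b * (b * d)) with (a * d) by (field; lra).
  replace (c / d * (b * d)) with (c * b) by (field; lra). exact H.
Qed.

Lemma small_k_bounds k : (k <= 6)%nat ->
  INR (fact k) <= 720 /\ 2 ^ k <= 64 /\ INR (S k) <= 7 /\ (triangular k <= 21)%nat.
Proof. intros Hk. do 7 (destruct k; [simpl; repeat split; try lra; lia|]). lia. Qed.

Lemma root_ge x c q : (1 <= q)%nat -> 0 < c -> c ^ q <= x -> c <= Rpower x (/ INR q).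
Proof.
  intros Hq Hc H. assert (0 < c ^ q) by (apply pow_lt; auto).
  apply (pow_le_inv _ _ q); auto; [lra|left; apply Rpower_pos|].
  rewrite Rpower_root_pow; auto; lra.
Qed.

Lemma Rpower_pow_mult x y q : 0 < x -> Rpower x y ^ q = Rpower x (y * INR q).
Proof. intros Hx. rewrite <- Rpower_pow, Rpower_mult by apply Rpower_pos. reflexivity. Qed.

Definition power_factor (N M : R) (k : nat) : R :=
  Rpower (ln N) (2 / INR (k * k + k)) * Rpower M (1 - 2 / INR (k + 1)).

Lemma power_factor_pow N M k : (1 <= k)%nat -> 1 < ln N -> 0 < M ->
  power_factor N M k ^ triangular k = ln N * M ^ (triangular k - k).
Proof.
  intros Hk HL HM. unfold power_factor. rewrite Rpow_mult_distr, !Rpower_pow_mult by lra.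
  assert (Hq := triangular_double k).
  assert (HS : INR (k * k + k) = 2 * INR (triangular k))
    by (replace (k * k + k)%nat with (2 * triangular k)%nat by nia; rewrite mult_INR; reflexivity).
  assert (Hk0 : 0 < INR k) by (apply lt_0_INR; lia).
  assert (Hqk : INR (triangular k - k) = INR (triangular k) - INR k)
    by (apply minus_INR; nia).
  assert (Hq' : INR (triangular k) = INR k * (INR k + 1) / 2).
  { apply (Rmult_eq_reg_l 2); [|lra]. rewrite <- HS, plus_INR, mult_INR. field. }
  replace (2 / INR (k * k + k) * INR (triangular k)) with 1 by (rewrite HS; field; nra).
  replace ((1 - 2 / INR (k + 1)) * INR (triangular k)) with (INR (triangular k - k))
    by (rewrite Hqk, plus_INR, Hq'; simpl INR; field; lra).
  rewrite Rpower_1, Rpower_pow; lra.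
Qed.

Lemma power_factor_ge_69 N M k : (2 <= k <= 6)%nat -> 200000 <= ln N -> 100000 <= M ->
  69 <= power_factor N M k.
Proof.
  intros Hk HL HM. unfold power_factor.
  assert (Hk2 : 2 <= INR k) by (replace 2 with (INR 2) by (simpl; lra); apply le_INR; lia).
  assert (Hk6 : INR k <= 6) by (replace 6 with (INR 6) by (simpl; lra); apply le_INR; lia).
  assert (A : 3 / 2 <= Rpower (ln N) (2 / INR (k * k + k))).
  { apply Rle_trans with (Rpower (ln N) (/ INR 21)).
    - apply root_ge; [lia|lra|]. simpl; lra.
    - apply Rle_Rpower; [lra|]. rewrite plus_INR, mult_INR.
      apply Rle_div_r; [nra|]. simpl INR. nra. }
  assert (B : 46 <= Rpower M (1 - 2 / INR (k + 1))).
  { apply Rle_trans with (Rpower M (/ INR 3)).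
    - apply root_ge; [lia|lra|]. simpl; lra.
    - apply Rle_Rpower; [lra|]. rewrite plus_INR. simpl INR.
      assert (2 / (INR k + 1) <= 2 / 3) by (apply Rle_div_l; [lra|]; unfold Rdiv; nra).
      lra. }
  nra.
Qed.

(* [kappa k * ln N / (M^k ln^2 M)] bounds [|f_N^(k)|] on [[M, 2M]]; [rho] is the slack with
   which the order-k test fits under [C_k] times the power factor. *)
Definition kappa (k : nat) : R :=
  2 * IZR (lead_hi k) + 1.001 * (IZR (tail_log_coef k) + IZR (tail_const_coef k)).

Definition admissible (k : nat) (rho : R) : Prop :=
  forallb (well_shaped_term k) (signed_derivative k) = true /\
  tail_log_coef k = lead_lo k /\ (1 <= lead_lo k)%Z /\
  1.001 * IZR (tail_const_coef k) <= 49000 * IZR (lead_lo k) /\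
  0 < rho /\ kappa k / INR (fact k) + 1 <= 100 * rho ^ triangular k /\
  INR k * rho + INR k / 69 <= Ck k.

Lemma sumZ_nonneg (g : term -> Z) l : (forall tau, (0 <= g tau)%Z) -> (0 <= sumZ g l)%Z.
Proof. intros Hg. induction l; simpl; [lia|]. specialize (Hg a). lia. Qed.

Lemma tail_log_coef_nonneg k : 0 <= IZR (tail_log_coef k).
Proof.
  apply IZR_le, sumZ_nonneg. intros [[[[c p] n] m] e]. simpl.
  destruct (negb e && Nat.eqb m 1); lia.
Qed.

Lemma tail_const_coef_nonneg k : 0 <= IZR (tail_const_coef k).
Proof.
  apply IZR_le, sumZ_nonneg. intros [[[[c p] n] m] e]. simpl.
  destruct (negb e && negb (Nat.eqb m 1)); lia.
Qed.

Lemma lead_lo_le_hi k : (k <= 6)%nat ->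
  forallb (well_shaped_term k) (signed_derivative k) = true -> IZR (lead_lo k) <= IZR (lead_hi k).
Proof.
  intros Hk Hs.
  (* any [t] yields some [a] between the two bounds *)
  destruct (scaled_Derive_n_fL 0 k 10001 Hs ltac:(lra) Hk) as [a [b [_ [Ha _]]]].
  lra.
Qed.

Lemma admissible_orders k : (2 <= k <= 6)%nat -> admissible k (if Nat.eqb k 2 then 1 / 2 else 1).
Proof.
  intros Hk. destruct (coefficients k ltac:(lia)) as [Hs [E1 [E2 [E3 E4]]]].
  unfold admissible, kappa. rewrite E3, E4, E2, E1.
  destruct k as [|[|[|[|[|[|[|k]]]]]]]; try lia.
  all: cbn [fact triangular Ck Nat.eqb Nat.add Nat.mul nth Nat.sub]; rewrite !INR_IZR_INZ;
    simpl Z.of_nat; repeat split; auto; try lia; simpl; lra.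
Qed.

Section Regimes.

Variables N M : R.
Hypothesis HN : 0 < N.
Hypothesis HL : 200000 <= ln N.
Hypothesis HM : 100000 <= M.
Hypothesis Hl : 10 <= ln M.

Lemma ln_range t : M <= t <= 2 * M -> ln M <= ln t <= ln M + 1 /\ 0 <= ln (t - 1) <= ln t.
Proof.
  intros Ht. assert (ln 2 <= 1) by apply ln_2_le_1.
  assert (ln t <= ln (2 * M)) by (apply ln_le; lra). rewrite ln_mult in H0 by lra.
  split; split; try lra; apply ln_le || (rewrite <- ln_1; apply ln_le); lra.
Qed.

(* On [[M, 2M]] one has [1 < f_N < 3], so the nearest integer is 2. *)
Lemma fN_near_two x : 0.9 * ln N <= ln M -> M <= x <= 2 * M ->
  dist_int (fN N x) < 1 / (N * ln M) ->
  Rabs (ln N - (2 * ln x - ln (x - 1))) < 2 / N /\ ln x < ln N + 1.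
Proof.
  intros Hbig Hx Hd. set (L := ln N) in *. set (u := ln x).
  assert (Hu : ln M <= u <= 2 * ln M).
  { split; [apply ln_le; lra|]. replace (2 * ln M) with (ln (M * M)) by (rewrite ln_mult; lra).
    apply ln_le; nra. }
  assert (Hx1 := ln_pred_ge x ltac:(lra)). fold u in Hx1.
  assert (ln (x - 1) <= u) by (apply ln_le; lra).
  set (d := 1 / (N * ln M)) in *.
  assert (Hdu : 0 <= d * u <= 2 / N).
  { assert (0 < N * ln M) by nra.
    assert (0 < / (N * ln M)) by (apply Rinv_0_lt_compat; lra).
    unfold d. replace (1 / (N * ln M) * u) with (u * / (N * ln M)) by (field; lra).
    replace (2 / N) with (2 * ln M * / (N * ln M)) by (field; lra).
    split; [apply Rmult_le_pos|apply Rmult_le_compat_r]; lra. }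
  assert (HN2 : 2 / N <= 0.001).
  { assert (1 + L <= N) by (apply ln_ge_one_plus; auto).
    apply (Rmult_le_reg_r N); auto. unfold Rdiv. rewrite Rmult_assoc, Rinv_l; lra. }
  destruct (dist_int_lt_near _ _ Hd) as [m Hm].
  assert (Hnum : Rabs (L + ln (x - 1) - IZR m * u) < d * u).
  { replace (L + ln (x - 1) - IZR m * u) with ((fN N x - IZR m) * u) by (unfold fN, L, u in *; field; lra).
    rewrite Rabs_mult, (Rabs_right u) by lra. apply Rmult_lt_compat_r; lra. }
  apply Rabs_def2 in Hnum.
  assert (Hm2 : m = 2%Z).
  { assert (1 < IZR m).
    { destruct (Rle_lt_dec (IZR m) 1); auto.
      assert (IZR m * u <= 1 * u) by (apply Rmult_le_compat_r; lra). lra. }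
    assert (IZR m < 3).
    { destruct (Rle_lt_dec 3 (IZR m)); auto.
      assert (3 * u <= IZR m * u) by (apply Rmult_le_compat_r; lra). lra. }
    apply lt_IZR in H0, H1. lia. }
  subst m. split; [apply Rabs_def1|]; simpl in Hnum; lra.
Qed.

Lemma count_near_two l : 0.9 * ln N <= ln M -> hits (fN N) M (1 / (N * ln M)) l ->
  INR (length l) <= 24.
Proof.
  intros Hbig [Hs Hin].
  assert (Hlen : (Z.of_nat (length l) <= 24)%Z).
  { apply StronglySorted_length_le_span; auto; [|lia].
    intros x y Hx Hy. destruct (Z.lt_ge_cases x y) as [Hxy|]; [|lia].
    destruct (Hin x Hx) as [Rx Dx], (Hin y Hy) as [Ry Dy].
    destruct (fN_near_two _ Hbig Rx Dx) as [Ax _], (fN_near_two _ Hbig Ry Dy) as [Ay By].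
    apply lt_IZR. rewrite minus_IZR.
    apply (near_two_close N); auto; [lra|apply IZR_lt; auto]. }
  rewrite INR_IZR_INZ. apply IZR_le in Hlen. lra.
Qed.

Lemma Derive_n_fN_bounds k t : (k <= 6)%nat ->
  forallb (well_shaped_term k) (signed_derivative k) = true -> (0 <= lead_lo k)%Z ->
  M <= t <= 2 * M ->
  (ln N * IZR (lead_lo k)
     - 1.001 * (IZR (tail_log_coef k) * (ln M + 1) + IZR (tail_const_coef k)))
    / (2 ^ k * M ^ k * (ln M + 1) ^ 2)
  <= Rabs (Derive_n (fN N) k t) <=
  ((ln N + ln M + 1) * IZR (lead_hi k)
     + 1.001 * (IZR (tail_log_coef k) * (ln M + 1) + IZR (tail_const_coef k)))
    / (M ^ k * ln M ^ 2).
Proof.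
  intros Hk Hshape Hlo Ht.
  destruct (ln_range t Ht) as [[U1 U2] [B1 B2]].
  destruct (scaled_Derive_n_fL (ln N) k t Hshape ltac:(lra) Hk) as [a [b [E [Ha Hb]]]].
  change (fL (ln N)) with (fN N) in E.
  set (D := Rabs (Derive_n (fN N) k t)) in *. set (P := t ^ k * ln t ^ 2) in *.
  set (Tb := 1.001 * (IZR (tail_log_coef k) * (ln M + 1) + IZR (tail_const_coef k))).
  assert (HTl := tail_log_coef_nonneg k). apply IZR_le in Hlo.
  assert (HbTb : Rabs b <= Tb)
    by (eapply Rle_trans; [apply Hb|]; unfold Tb; apply Rmult_le_compat_l; nra).
  assert (Hb' := HbTb). apply Rabs_le_between in Hb'.
  assert (HB : ln N <= ln N + ln (t - 1) <= ln N + ln M + 1) by lra.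
  assert (HP : M ^ k * ln M ^ 2 <= P <= 2 ^ k * M ^ k * (ln M + 1) ^ 2).
  { unfold P. rewrite <- Rpow_mult_distr.
    split; apply Rmult_le_compat; try apply pow_le; try apply pow_incr; lra. }
  assert (HMl : 0 < M ^ k * ln M ^ 2) by (apply Rmult_lt_0_compat; apply pow_lt; lra).
  assert (0 <= D) by apply Rabs_pos.
  split.
  - apply Rle_div_l; [nra|].
    assert (ln N * IZR (lead_lo k) <= (ln N + ln (t - 1)) * a) by (apply Rmult_le_compat; lra).
    assert (D * P <= D * (2 ^ k * M ^ k * (ln M + 1) ^ 2)) by (apply Rmult_le_compat_l; lra).
    assert (Rabs ((ln N + ln (t - 1)) * a + b) >= (ln N + ln (t - 1)) * a + b)
      by (apply Rle_ge, Rle_abs).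
    nra.
  - apply Rle_div_r; auto.
    assert ((ln N + ln (t - 1)) * a <= (ln N + ln M + 1) * IZR (lead_hi k))
      by (apply Rmult_le_compat; lra).
    assert (D * (M ^ k * ln M ^ 2) <= D * P) by (apply Rmult_le_compat_l; lra).
    assert (Rabs ((ln N + ln (t - 1)) * a + b) <= (ln N + ln (t - 1)) * a + Rabs b).
    { eapply Rle_trans; [apply Rabs_triang|]. rewrite Rabs_right; [lra|].
      apply Rle_ge, Rmult_le_pos; lra. }
    lra.
Qed.

Section Order1.

Hypothesis Hsmall : ln M < 0.9 * ln N.

Lemma N_ge_M_order1 : 20000 * M <= N.
Proof.
  rewrite <- (exp_ln N), <- (exp_ln M) by lra.
  replace (ln N) with ((ln N - ln M) + ln M) by ring. rewrite exp_plus.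
  assert (1 + (ln N - ln M) <= exp (ln N - ln M)) by apply exp_ineq1_le.
  assert (0 < exp (ln M)) by apply exp_pos. nra.
Qed.

Lemma Derive_n_fN_bounds_order1 t : M <= t <= 2 * M ->
  0.09 * ln N / (2 * M * (ln M + 1) ^ 2) <= Rabs (Derive_n (fN N) 1 t) <=
  (ln N + 2.001 * (ln M + 1)) / (M * ln M ^ 2).
Proof.
  intros Ht. destruct (coefficients 1 ltac:(lia)) as [Hs [E1 [E2 [E3 E4]]]].
  assert (H := Derive_n_fN_bounds 1 t ltac:(lia) Hs ltac:(rewrite E1; simpl; lia) Ht).
  rewrite E3, E4, E2, E1, !pow_1 in H. cbn [nth Nat.sub] in H. split; [|lra].
  eapply Rle_trans; [|apply H]. unfold Rdiv.
  apply Rmult_le_compat_r; [left; apply Rinv_0_lt_compat; nra|lra].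
Qed.

Lemma delta_small_order1 :
  INR 2 * (1 / (N * ln M)) < 0.09 * ln N / (2 * M * (ln M + 1) ^ 2) / INR (fact 1).
Proof.
  assert (HNM := N_ge_M_order1).
  change (INR 2) with 2. change (INR (fact 1)) with 1. rewrite Rdiv_1_r.
  replace (2 * (1 / (N * ln M))) with (2 / (N * ln M)) by (field; nra).
  apply Rdiv_lt_cross; [nra|nra|].
  assert (0 < ln N * ln M) by nra.
  assert ((ln M + 1) ^ 2 <= 1.21 * ln M * ln M) by nra.
  assert (ln M * ln M <= ln M * (0.9 * ln N)) by (apply Rmult_le_compat_l; lra).
  assert (4.356 * M * (ln N * ln M) < 0.09 * N * (ln N * ln M))
    by (apply Rmult_lt_compat_r; lra).
  nra.
Qed.

Lemma count_order1 l : hits (fN N) M (1 / (N * ln M)) l ->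
  INR (length l) <= ln N / ln M ^ 2 + 3 / 2.
Proof.
  intros Hhits. assert (HNM := N_ge_M_order1).
  assert (Hd : 0 < 1 / (N * ln M)) by (apply Rdiv_lt_0_compat; nra).
  assert (H := count_le_of_derivative_bounds (fN N) M (1 / (N * ln M))
                 (0.09 * ln N / (2 * M * (ln M + 1) ^ 2))
                 ((ln N + 2.001 * (ln M + 1)) / (M * ln M ^ 2)) 1 l ltac:(lia) ltac:(lra)
                 (ex_derive_Derive_n_fL (ln N)) Derive_n_fN_bounds_order1 Hd
                 delta_small_order1 Hhits).
  change (INR (fact 1)) with 1 in H. change (INR (S 1)) with 2 in H.
  change (INR (triangular 1)) with 1 in H. change (INR 1) with 1 in H.
  rewrite Rinv_1, Rdiv_1_r, Rpower_1 in H by (apply Rplus_lt_le_0_compat; [apply Rdiv_lt_0_compat|]; nra).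
  assert (M * ((ln N + 2.001 * (ln M + 1)) / (M * ln M ^ 2)) <= ln N / ln M ^ 2 + 1 / 4).
  { replace (M * ((ln N + 2.001 * (ln M + 1)) / (M * ln M ^ 2)))
      with (ln N / ln M ^ 2 + 2.001 * (ln M + 1) / ln M ^ 2) by (field; lra).
    assert (2.001 * (ln M + 1) / ln M ^ 2 <= 1 / 4) by (apply Rle_div_l; nra). lra. }
  assert (M * (2 * (1 / (N * ln M))) <= 1 / 4).
  { replace (M * (2 * (1 / (N * ln M)))) with (2 * M / (N * ln M)) by (field; nra).
    apply Rle_div_l; nra. }
  lra.
Qed.

End Order1.

Lemma exp_half_ge : 1000000000 <= exp (ln N / 2).
Proof.
  assert (1 + ln N / 4 <= exp (ln N / 4)) by apply exp_ineq1_le.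
  replace (ln N / 2) with (ln N / 4 + ln N / 4) by field. rewrite exp_plus. nra.
Qed.

Lemma N_eq_exp_half : N = exp (ln N / 2) * exp (ln N / 2).
Proof.
  rewrite <- exp_plus. replace (ln N / 2 + ln N / 2) with (ln N) by field. rewrite exp_ln; auto.
Qed.

Section OrderK.

Variables (k : nat) (rho : R).
Hypothesis Hk : (2 <= k <= 6)%nat.
Hypothesis Hkl : INR k * ln M <= ln N / 2.
Hypothesis Hadm : admissible k rho.

Lemma ln_M_le_quarter : ln M <= ln N / 4.
Proof.
  assert (2 <= INR k) by (replace 2 with (INR 2) by (simpl; lra); apply le_INR; lia). nra.
Qed.

Lemma Mpow_le_exp_half : M ^ k <= exp (ln N / 2).
Proof.
  rewrite <- Rpower_pow by lra. unfold Rpower.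
  destruct (Rle_lt_or_eq_dec _ _ Hkl) as [Hlt|Heq]; [left; apply exp_increasing; lra|rewrite Heq; lra].
Qed.

Lemma Derive_n_fN_bounds_orderk t : M <= t <= 2 * M ->
  IZR (lead_lo k) * ln N / (2 * (2 ^ k * M ^ k) * (ln M + 1) ^ 2)
  <= Rabs (Derive_n (fN N) k t) <= kappa k * ln N / (M ^ k * ln M ^ 2).
Proof.
  intros Ht. destruct Hadm as [Hs [E01 [H1 [H02 _]]]].
  set (A := IZR (lead_lo k)) in *.
  assert (HA : 1 <= A) by (apply (IZR_le 1); auto).
  assert (Hhi := lead_lo_le_hi k ltac:(lia) Hs). fold A in Hhi.
  assert (HTc := tail_const_coef_nonneg k).
  assert (H := Derive_n_fN_bounds k t ltac:(lia) Hs ltac:(lia) Ht).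
  rewrite E01 in H. fold A in H.
  assert (0 < M ^ k) by (apply pow_lt; lra).
  assert (0 < 2 ^ k) by (apply pow_lt; lra).
  assert (ln M <= ln N / 4) by apply ln_M_le_quarter.
  split.
  - eapply Rle_trans; [|apply H].
    replace (A * ln N / (2 * (2 ^ k * M ^ k) * (ln M + 1) ^ 2))
      with (A * ln N / 2 / (2 ^ k * M ^ k * (ln M + 1) ^ 2)) by (field; nra).
    unfold Rdiv at 1 3.
    apply Rmult_le_compat_r;
      [left; apply Rinv_0_lt_compat; repeat apply Rmult_lt_0_compat; try apply pow_lt; lra|].
    assert (A * (ln M + 1) <= A * (ln N / 4 + 1)) by (apply Rmult_le_compat_l; lra).
    assert (A * (1.001 + 49000) <= A * (ln N * (1 / 2 - 1.001 / 4))) by (apply Rmult_le_compat_l; lra).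
    nra.
  - eapply Rle_trans; [apply H|]. unfold kappa, Rdiv.
    apply Rmult_le_compat_r;
      [left; apply Rinv_0_lt_compat; repeat apply Rmult_lt_0_compat; try apply pow_lt; lra|].
    rewrite E01. fold A.
    assert ((ln N + ln M + 1) * IZR (lead_hi k) <= 2 * ln N * IZR (lead_hi k))
      by (apply Rmult_le_compat_r; lra).
    assert (A * (ln M + 1) <= A * ln N) by (apply Rmult_le_compat_l; lra).
    assert (IZR (tail_const_coef k) <= IZR (tail_const_coef k) * ln N) by nra.
    nra.
Qed.

Lemma delta_small_orderk :
  INR (S k) * (1 / (N * ln M)) <
  IZR (lead_lo k) * ln N / (2 * (2 ^ k * M ^ k) * (ln M + 1) ^ 2) / INR (fact k).
Proof.
  destruct Hadm as [_ [_ [H1 _]]]. apply (IZR_le 1) in H1.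
  destruct (small_k_bounds k ltac:(lia)) as [Hf [H2 [HS _]]].
  assert (HMk := Mpow_le_exp_half). assert (HE := exp_half_ge). assert (HNE := N_eq_exp_half).
  assert (0 < M ^ k) by (apply pow_lt; lra).
  assert (0 < INR (fact k)) by apply INR_fact_lt_0.
  assert (0 < 2 ^ k) by (apply pow_lt; lra).
  set (P := 2 * (2 ^ k * M ^ k) * (ln M + 1) ^ 2 * INR (fact k)).
  replace (INR (S k) * (1 / (N * ln M))) with (INR (S k) / (N * ln M)) by (field; nra).
  replace (IZR (lead_lo k) * ln N / (2 * (2 ^ k * M ^ k) * (ln M + 1) ^ 2) / INR (fact k))
    with (IZR (lead_lo k) * ln N / P) by (unfold P; field; nra).
  apply Rdiv_lt_cross; [nra|unfold P; repeat apply Rmult_lt_0_compat; nra|].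
  assert (Hl2 : (ln M + 1) ^ 2 <= 1.21 * (ln M * ln N)).
  { assert (ln M * ln M <= ln M * ln N) by (apply Rmult_le_compat_l; generalize ln_M_le_quarter; lra).
    nra. }
  assert (HP : P <= 2 * (64 * M ^ k) * (1.21 * (ln M * ln N)) * 720).
  { assert (2 * (2 ^ k * M ^ k) <= 2 * (64 * M ^ k)) by nra.
    assert (2 * (2 ^ k * M ^ k) * (ln M + 1) ^ 2 <= 2 * (64 * M ^ k) * (1.21 * (ln M * ln N)))
      by (apply Rmult_le_compat; nra).
    unfold P. apply Rmult_le_compat; [left; prove_pos|lra|lra|lra]. }
  assert (INR (S k) * P <= 7 * (2 * (64 * M ^ k) * (1.21 * (ln M * ln N)) * 720))
    by (apply Rmult_le_compat; [apply pos_INR|unfold P; left; prove_pos|lra|lra]).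
  assert (M ^ k * 1000000000 <= N) by nra.
  assert (0 < ln M * ln N) by nra.
  assert (M ^ k * 1000000000 * (ln M * ln N) <= N * (ln M * ln N))
    by (apply Rmult_le_compat_r; lra).
  assert (N * (ln M * ln N) <= IZR (lead_lo k) * (N * (ln M * ln N)))
    by (rewrite <- (Rmult_1_l (N * _)) at 1; apply Rmult_le_compat_r; nra).
  assert (0 < M ^ k * (ln M * ln N)) by (apply Rmult_lt_0_compat; lra).
  lra.
Qed.

Lemma Derive_bound_plus_delta_orderk :
  kappa k * ln N / (M ^ k * ln M ^ 2) / INR (fact k) + INR (S k) * (1 / (N * ln M))
  <= (kappa k / INR (fact k) + 1) * ln N / (M ^ k * ln M ^ 2).
Proof.
  destruct (small_k_bounds k ltac:(lia)) as [_ [_ [HS _]]].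
  assert (ln M <= ln N / 4) by apply ln_M_le_quarter.
  assert (HMk := Mpow_le_exp_half). assert (HE := exp_half_ge). assert (HNE := N_eq_exp_half).
  assert (0 < M ^ k) by (apply pow_lt; lra).
  assert (0 < INR (fact k)) by apply INR_fact_lt_0.
  assert (INR (S k) * (1 / (N * ln M)) <= ln N / (M ^ k * ln M ^ 2)).
  { replace (INR (S k) * (1 / (N * ln M))) with (INR (S k) * M ^ k * ln M / (N * (M ^ k * ln M ^ 2)))
      by (field; nra).
    replace (ln N / (M ^ k * ln M ^ 2)) with (ln N * N / (N * (M ^ k * ln M ^ 2))) by (field; nra).
    unfold Rdiv. apply Rmult_le_compat_r; [left; prove_pos|].
    assert (INR (S k) * M ^ k <= 7 * exp (ln N / 2))
      by (apply Rmult_le_compat; [apply pos_INR|lra|lra|lra]).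
    assert (INR (S k) * M ^ k * ln M <= 7 * exp (ln N / 2) * ln N)
      by (apply Rmult_le_compat; [apply Rmult_le_pos; [apply pos_INR|lra]|lra|lra|lra]).
    assert (0 <= exp (ln N / 2) * ln N) by (apply Rmult_le_pos; [left; apply exp_pos|lra]).
    assert (7 * exp (ln N / 2) * ln N <= exp (ln N / 2) * ln N * exp (ln N / 2)) by nra.
    rewrite HNE at 2. lra. }
  replace ((kappa k / INR (fact k) + 1) * ln N / (M ^ k * ln M ^ 2))
    with (kappa k * ln N / (M ^ k * ln M ^ 2) / INR (fact k) + ln N / (M ^ k * ln M ^ 2))
    by (field; nra).
  lra.
Qed.

Lemma kappa_nonneg : 0 <= kappa k.
Proof.
  destruct Hadm as [Hs [E01 [H1 _]]]. apply (IZR_le 1) in H1.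
  assert (Hhi := lead_lo_le_hi k ltac:(lia) Hs).
  assert (HTl := tail_log_coef_nonneg k). assert (HTc := tail_const_coef_nonneg k).
  unfold kappa. lra.
Qed.

Lemma root_le_orderk X : 0 < X ->
  X <= (kappa k / INR (fact k) + 1) * ln N / (M ^ k * ln M ^ 2) ->
  M * Rpower X (/ INR (triangular k)) <= rho * power_factor N M k.
Proof.
  intros HX0 HX. destruct Hadm as [_ [_ [_ [_ [Hrho [Hkap _]]]]]].
  assert (Hq := triangular_double k). set (q := triangular k) in *.
  assert (0 < power_factor N M k) by (unfold power_factor; apply Rmult_lt_0_compat; apply Rpower_pos).
  assert (0 < INR (fact k)) by apply INR_fact_lt_0.
  assert (0 <= kappa k / INR (fact k) + 1)
    by (generalize kappa_nonneg; intros; apply Rplus_le_le_0_compat; [apply Rdiv_le_0_compat|]; lra).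
  set (c := kappa k / INR (fact k) + 1) in *.
  assert (0 < M ^ k) by (apply pow_lt; lra). assert (0 < M ^ (q - k)) by (apply pow_lt; lra).
  apply (pow_le_inv _ _ q); [apply Rmult_le_pos; [lra|left; apply Rpower_pos]|nra|nia|].
  rewrite !Rpow_mult_distr, Rpower_root_pow, power_factor_pow by (lra || nia). fold q.
  replace (M ^ q) with (M ^ k * M ^ (q - k)) by (rewrite <- pow_add; f_equal; nia).
  assert (M ^ k * M ^ (q - k) * X <= c * (ln N * M ^ (q - k)) / ln M ^ 2).
  { replace (c * (ln N * M ^ (q - k)) / ln M ^ 2)
      with (M ^ k * M ^ (q - k) * (c * ln N / (M ^ k * ln M ^ 2))) by (field; lra).
    apply Rmult_le_compat_l; nra. }
  assert (c * (ln N * M ^ (q - k)) / ln M ^ 2 <= c / 100 * (ln N * M ^ (q - k))).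
  { assert (0 <= c * (ln N * M ^ (q - k)))
      by (apply Rmult_le_pos; [lra|left; apply Rmult_lt_0_compat; lra]).
    assert (/ ln M ^ 2 <= / 100) by (apply Rinv_le_contravar; nra).
    replace (c / 100 * (ln N * M ^ (q - k))) with (c * (ln N * M ^ (q - k)) * / 100) by field.
    unfold Rdiv. apply Rmult_le_compat_l; lra. }
  assert (c / 100 * (ln N * M ^ (q - k)) <= rho ^ q * (ln N * M ^ (q - k)))
    by (apply Rmult_le_compat_r; nra).
  lra.
Qed.

Lemma count_orderk l : hits (fN N) M (1 / (N * ln M)) l ->
  INR (length l) <= Ck k * power_factor N M k.
Proof.
  intros Hhits. destruct Hadm as [_ [_ [H1 [_ [Hrho [_ HC]]]]]].
  assert (Hd : 0 < 1 / (N * ln M)) by (apply Rdiv_lt_0_compat; nra).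
  assert (H := count_le_of_derivative_bounds (fN N) M (1 / (N * ln M))
                 (IZR (lead_lo k) * ln N / (2 * (2 ^ k * M ^ k) * (ln M + 1) ^ 2))
                 (kappa k * ln N / (M ^ k * ln M ^ 2)) k l ltac:(lia) ltac:(lra)
                 (ex_derive_Derive_n_fL (ln N)) Derive_n_fN_bounds_orderk Hd
                 delta_small_orderk Hhits).
  assert (HX : 0 < kappa k * ln N / (M ^ k * ln M ^ 2) / INR (fact k) + INR (S k) * (1 / (N * ln M))).
  { assert (0 < INR (S k) * (1 / (N * ln M))) by (apply Rmult_lt_0_compat; [apply lt_0_INR; lia|lra]).
    assert (0 <= kappa k * ln N / (M ^ k * ln M ^ 2) / INR (fact k)).
    { apply Rdiv_le_0_compat; [|apply INR_fact_lt_0]. apply Rdiv_le_0_compat; [|prove_pos].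
      generalize kappa_nonneg; nra. }
    lra. }
  assert (Hroot := root_le_orderk _ HX Derive_bound_plus_delta_orderk).
  assert (H69 := power_factor_ge_69 N M k Hk HL HM).
  assert (Hk0 : 0 <= INR k) by apply pos_INR.
  assert (INR k * (M * Rpower _ _) <= INR k * (rho * power_factor N M k))
    by (apply Rmult_le_compat_l; [lra|exact Hroot]).
  assert (INR k <= INR k / 69 * power_factor N M k).
  { replace (INR k) with (INR k / 69 * 69) at 1 by field. apply Rmult_le_compat_l; [|lra].
    apply Rdiv_le_0_compat; lra. }
  assert ((INR k * rho + INR k / 69) * power_factor N M k <= Ck k * power_factor N M k)
    by (apply Rmult_le_compat_r; lra).
  lra.
Qed.

End OrderK.

Lemma count_bound_order1 l : hits (fN N) M (1 / (N * ln M)) l ->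
  INR (length l) <= Ck 1 * power_factor N M 1.
Proof.
  intros Hhits. unfold power_factor, Ck. simpl INR.
  replace (2 / (1 + 1)) with 1 by field. replace (1 - 1) with 0 by ring.
  rewrite Rpower_1, Rpower_O by lra.
  destruct (Rle_lt_dec (0.9 * ln N) (ln M)) as [Hbig|Hsmall].
  - assert (H := count_near_two l Hbig Hhits). lra.
  - assert (H := count_order1 Hsmall l Hhits).
    assert (ln N / ln M ^ 2 <= ln N / 100)
      by (apply Rmult_le_compat_l; [lra|apply Rinv_le_contravar; nra]).
    lra.
Qed.

Lemma count_bound_orderk k l : (2 <= k <= 6)%nat -> hits (fN N) M (1 / (N * ln M)) l ->
  INR (length l) <= Ck k * power_factor N M k.
Proof.
  intros Hk Hhits.
  assert (HC : 1 <= Ck k) by (destruct k as [|[|[|[|[|[|[|k]]]]]]]; try lia; unfold Ck; lra).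
  assert (H69 := power_factor_ge_69 N M k Hk HL HM).
  assert (H24 : 24 <= Ck k * power_factor N M k) by nra.
  destruct (Rle_lt_dec (0.9 * ln N) (ln M)) as [Hbig|Hsmall].
  - assert (H := count_near_two l Hbig Hhits). lra.
  - destruct (Rle_lt_dec (INR k * ln M) (ln N / 2)) as [Hkl|Hkl].
    + exact (count_orderk k _ Hk Hkl (admissible_orders k Hk) l Hhits).
    + assert (H := count_order1 Hsmall l Hhits).
      assert (INR k <= 6) by (replace 6 with (INR 6) by (simpl; lra); apply le_INR; lia).
      assert (ln N / ln M ^ 2 <= 2) by (apply Rle_div_l; nra).
      lra.
Qed.

End Regimes.

Lemma Zrange_sorted lo hi : StronglySorted Z.lt (Zrange lo hi).
Proof.
  unfold Zrange. generalize (Z.to_nat (hi - lo + 1)) as n, 0%nat as s.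
  induction n; intros s; simpl; constructor; [apply IHn|].
  rewrite Forall_forall. intros x Hx. apply in_map_iff in Hx as [j [<- Hj]].
  apply in_seq in Hj. lia.
Qed.

Lemma Rcount_le_of_hits f M delta B : (forall l, hits f M delta l -> INR (length l) <= B) ->
  INR (Rcount f M delta) <= B.
Proof.
  intros H. apply H. split; [apply StronglySorted_filter, Zrange_sorted|].
  intros x Hx. apply filter_In in Hx as [_ Hx].
  destruct (Rlt_dec (IZR x) M); [discriminate|].
  destruct (Rlt_dec (2 * M) (IZR x)); [discriminate|].
  destruct (Rlt_dec (dist_int (f (IZR x))) delta); [|discriminate].
  split; [lra|auto].
Qed.

Lemma log_bounds N M : powerRZ 10 100000 <= N -> 10 ^ 5 <= M ->
  0 < N /\ 200000 <= ln N /\ 100000 <= M /\ 10 <= ln M.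
Proof.
  intros HN HM.
  assert (Hln10 : 2 <= ln 10).
  { rewrite <- (ln_exp 2). apply ln_le; [apply exp_pos|].
    replace 2 with (1 + 1) by ring. rewrite exp_plus.
    assert (exp 1 <= 3) by apply exp_le_3. assert (0 < exp 1) by apply exp_pos. nra. }
  rewrite powerRZ_Rpower in HN by lra.
  assert (0 < Rpower 10 (IZR 100000)) by apply Rpower_pos.
  simpl in HM. repeat split; try lra.
  - apply Rle_trans with (ln (Rpower 10 (IZR 100000))); [rewrite ln_Rpower; nra|].
    apply ln_le; auto.
  - apply Rle_trans with (ln (10 ^ 5)); [rewrite ln_pow by lra; simpl INR; lra|].
    apply ln_le; [simpl|]; lra.
Qed.

Theorem lemma3p3 (N M : R) (k : nat) :
  powerRZ 10 100000 <= N ->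
  10 ^ 5 <= M ->
  (1 <= k <= 6)%nat ->
  INR (Rcount (fN N) M (1 / (N * ln M)))
    <= Ck k * Rpower (ln N) (2 / INR (k * k + k))
            * Rpower M (1 - 2 / INR (k + 1)).
Proof.
  intros HN0 HM0 Hk.
  destruct (log_bounds N M HN0 HM0) as [HN [HL [HM Hl]]].
  rewrite Rmult_assoc. change (Rpower (ln N) _ * _) with (power_factor N M k).
  apply Rcount_le_of_hits. intros l Hhits.
  destruct (Nat.eq_dec k 1) as [->|Hk1].
  - apply count_bound_order1; auto.
  - apply count_bound_orderk; auto. lia.
Qed.
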